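(* Let $T>0$, $0<\eta<T$, $0<\alpha<\frac{1}{\eta}$, let $f\in C([0,\infty),[0,\infty))$, and let $a\in C([0,T],[0,\infty))$ with $a(t_0)>0$ for some $t_0\in[0,T]$. Consider the boundary value problem \[ u''(t)+a(t)f(u(t))=0,\quad 0<t<T,\qquad u'(0)=0,\quad u(T)=\alpha\int_0^{\eta}u(s)\,ds. \tag{P} \] Assume that $f_0=\alpha_1\in[0,\theta_1\Lambda_1)$ for some $\theta_1\in(0,1]$, and $f_\infty=\beta_1\in\left(\frac{\theta_2}{\gamma}\Lambda_2,\infty\right)$ for some $\theta_2\ge1$. Then (P) has at least one positive solution.
   Context: $f_0=\lim_{u\to0^+}\frac{f(u)}{u}$, $f_\infty=\lim_{u\to\infty}\frac{f(u)}{u}$ (assumed to exist with the stated values; $\alpha_1,\beta_1$ are just names for these limits). $\gamma=\dfrac{\alpha\eta(T-\eta)}{T-\alpha\eta^2}$, $\Lambda_1=\dfrac{1-\alpha\eta}{\int_0^T (T-s)a(s)\,ds}$, and $\Lambda_2=\dfrac{1-\alpha\eta}{\gamma\left(\int_\eta^T (T-s)a(s)\,ds+\frac12\int_0^\eta\left[2(T-\eta)+\alpha(\eta^2-s^2)\right]a(s)\,ds\right)}$. A positive solution of (P) is a function $u\in C^2([0,T])$ satisfying (P) with $u(t)\ge0$ on $[0,T]$ and $u$ not identically zero. *)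

From Stdlib Require Import Reals.
From Coquelicot Require Import Coquelicot.
Open Scope R_scope.

Definition cont_on (D : R -> Prop) (g : R -> R) : Prop :=
  forall x, D x -> filterlim g (within D (locally x)) (locally (g x)).

Definition Icc (a b : R) : R -> Prop := fun t => a <= t <= b.

(* u is C^2 on [0,T]: (a representative on R) twice differentiable at every
   point of [0,T], with second derivative continuous on [0,T]. *)
Definition C2_on (a b : R) (u : R -> R) : Prop :=
  (forall t, Icc a b t -> ex_derive u t /\ ex_derive (Derive u) t) /\
  cont_on (Icc a b) (Derive_n u 2).

Definition gammaP (T eta alpha : R) : R :=
  alpha * eta * (T - eta) / (T - alpha * eta ^ 2).

Definition Lambda1 (T eta alpha : R) (a : R -> R) : R :=
  (1 - alpha * eta) / RInt (fun s => (T - s) * a s) 0 T.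

Definition Lambda2 (T eta alpha : R) (a : R -> R) : R :=
  (1 - alpha * eta) /
  (gammaP T eta alpha *
    (RInt (fun s => (T - s) * a s) eta T
     + / 2 * RInt (fun s => (2 * (T - eta) + alpha * (eta ^ 2 - s ^ 2)) * a s) 0 eta)).

Definition positive_solution (T eta alpha : R) (a f : R -> R) (u : R -> R) : Prop :=
  C2_on 0 T u /\
  (forall t, 0 < t < T -> Derive_n u 2 t + a t * f (u t) = 0) /\
  Derive u 0 = 0 /\
  u T = alpha * RInt u 0 eta /\
  (forall t, 0 <= t <= T -> 0 <= u t) /\
  (exists t, 0 <= t <= T /\ u t <> 0).

From Stdlib Require Import Reals Lra Lia Psatz Classical IndefiniteDescription.
From Coquelicot Require Import Coquelicot.
From mathcomp Require classical.filter.
Open Scope R_scope.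

(* Shooting on delayed approximations.  For a delay d = T/(n+1) the problem
   u'' = -a f(u(. - d)), u(0) = c, u'(0) = 0 is solved exactly by n+1 steps of
   integration, and the nonlocal residual u(T) - alpha * int_0^eta u is continuous
   in c.  Near 0, f(u) <= lambda u with lambda < Lambda1 makes the residual
   positive for a small c = r; near infinity, f(u) >= mu u with mu large
   together with concavity (u >= kappa * c on [0, T]) makes it negative for a
   large c = R, so some c_n in [r, R] gives a delayed solution.  These are
   uniformly bounded and equi-Lipschitz; a limit along a free ultrafilter on nat
   (a hand-made Arzela-Ascoli) solves the undelayed integral equation, hence (P),
   and it is positive because it is decreasing, u(0) >= r and u(T) >= 0. *)

(** * Ultrafilters on nat *)

Record ultrafilter_nat (U : (nat -> Prop) -> Prop) : Prop := {
  ultra_and : forall P Q, U P -> U Q -> U (fun n => P n /\ Q n);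
  ultra_impl : forall P Q : nat -> Prop, (forall n, P n -> Q n) -> U P -> U Q;
  ultra_proper : ~ U (fun _ => False);
  ultra_or_not : forall P, U P \/ U (fun n => ~ P n);
  ultra_tail : forall N, U (fun n => (N <= n)%nat) }.

Lemma ultrafilter_nat_exists : exists U, ultrafilter_nat U.
Proof.
destruct (@filter.ultraFilterLemma nat filter.eventually filter.eventually_filter)
  as [G [GU sFG]].
pose proof (@filter.ultra_proper _ G GU) as PG.
pose proof (@filter.filter_filter _ G PG) as FG.
exists G; split.
- exact (@filter.filterI _ G FG).
- exact (@filter.filterS _ G FG).
- intros H. now destruct (@filter.filter_ex _ G PG _ H).
- intros P. exact (@filter.in_ultra_setVsetC _ G P GU).
- intros N. apply sFG. exists N; [easy|]. intros n Hn; simpl in Hn.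
  destruct (@ssrnat.leP N n); [assumption | discriminate Hn].
Qed.

Definition ultra_cvg (U : (nat -> Prop) -> Prop) (x : nat -> R) (l : R) : Prop :=
  forall e, 0 < e -> U (fun n => Rabs (x n - l) < e).

Section Ultrafilter.

Variable U : (nat -> Prop) -> Prop.
Hypothesis HU : ultrafilter_nat U.

Lemma ultra_witness (P : nat -> Prop) : U P -> exists n, P n.
Proof.
intros H. apply NNPP. intros C. apply (ultra_proper _ HU).
apply (ultra_impl _ HU P); [|exact H]. intros n Pn. apply C. now exists n.
Qed.

Lemma ultra_always (P : nat -> Prop) : (forall n, P n) -> U P.
Proof.
intros H. apply (ultra_impl _ HU (fun n => (0 <= n)%nat)); [auto|].
apply (ultra_tail _ HU).
Qed.

Lemma ultra_forall_le (P : nat -> nat -> Prop) m :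
  (forall i, (i <= m)%nat -> U (P i)) -> U (fun n => forall i, (i <= m)%nat -> P i n).
Proof.
induction m as [|m IH]; intros H.
- apply (ultra_impl _ HU (P 0%nat)); [|apply H; lia].
  intros n Hn i Hi. now replace i with 0%nat by lia.
- apply (ultra_impl _ HU (fun n => (forall i, (i <= m)%nat -> P i n) /\ P (S m) n)).
  + intros n [H1 H2] i Hi. destruct (Nat.eq_dec i (S m)) as [->|]; auto. apply H1; lia.
  + apply (ultra_and _ HU); [apply IH; intros; apply H; lia | apply H; lia].
Qed.

(* The U-limit is the supremum of the levels that x eventually exceeds along U. *)
Lemma ultra_cvg_exists (x : nat -> R) lo hi :
  (forall n, lo <= x n <= hi) -> exists l, lo <= l <= hi /\ ultra_cvg U x l.
Proof.
intros Hb.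
set (E := fun y => lo <= y /\ U (fun n => y <= x n)).
assert (Ehi : forall y, E y -> y <= hi).
{ intros y [_ Hy]. apply Rnot_lt_le. intros Hlt. apply (ultra_proper _ HU).
  apply (ultra_impl _ HU (fun n => y <= x n)); auto. intros n Hn. specialize (Hb n). lra. }
assert (Elo : E lo) by (split; [lra | apply ultra_always; apply Hb]).
destruct (completeness E) as [l [Hub Hlub]]; [now exists hi | now exists lo |].
assert (lo <= l) by now apply Hub.
assert (l <= hi) by now apply Hlub.
exists l. split; [lra|]. intros e He.
assert (Above : U (fun n => x n < l + e)).
{ destruct (ultra_or_not _ HU (fun n => x n < l + e)) as [h|h]; auto.
  assert (E (l + e)).
  { split; [lra|]. apply (ultra_impl _ HU _ _ (fun n Hn => Rnot_lt_le _ _ Hn) h). }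
  assert (l + e <= l) by now apply Hub. lra. }
assert (Below : exists y, E y /\ l - e < y).
{ apply NNPP. intros C. assert (l <= l - e); [|lra].
  apply Hlub. intros y Hy. apply Rnot_lt_le. intros Hlt. apply C. now exists y. }
destruct Below as [y [[_ Ey] Hy]].
apply (ultra_impl _ HU (fun n => x n < l + e /\ y <= x n)).
- intros n [h1 h2]. apply Rabs_def1; lra.
- now apply (ultra_and _ HU).
Qed.

Lemma ultra_cvg_unique (x : nat -> R) l1 l2 :
  ultra_cvg U x l1 -> ultra_cvg U x l2 -> l1 = l2.
Proof.
intros H1 H2. apply NNPP. intros C.
assert (Hd : 0 < Rabs (l1 - l2) / 2) by (assert (0 < Rabs (l1 - l2)) by (apply Rabs_pos_lt; lra); lra).
destruct (ultra_witness _ (ultra_and _ HU _ _ (H1 _ Hd) (H2 _ Hd))) as [n [h1 h2]].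
pose proof (Rabs_triang (x n - l2) (- (x n - l1))) as Htri.
rewrite Rabs_Ropp in Htri. replace (x n - l2 + - (x n - l1)) with (l1 - l2) in Htri by ring.
lra.
Qed.

End Ultrafilter.

(** * Calculus on R *)

Definition Rcontinuous (g : R -> R) : Prop := forall x, continuous g x.

Lemma Rcontinuous_const c : Rcontinuous (fun _ => c).
Proof. intros x. apply continuous_const. Qed.

Lemma Rcontinuous_id : Rcontinuous (fun x => x).
Proof. intros x. apply continuous_id. Qed.

Lemma Rcontinuous_plus g h : Rcontinuous g -> Rcontinuous h -> Rcontinuous (fun x => g x + h x).
Proof. intros Hg Hh x. exact (continuous_plus g h x (Hg x) (Hh x)). Qed.

Lemma Rcontinuous_mult g h : Rcontinuous g -> Rcontinuous h -> Rcontinuous (fun x => g x * h x).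
Proof. intros Hg Hh x. exact (continuous_mult g h x (Hg x) (Hh x)). Qed.

Lemma Rcontinuous_opp g : Rcontinuous g -> Rcontinuous (fun x => - g x).
Proof. intros Hg x. exact (continuous_opp g x (Hg x)). Qed.

Lemma Rcontinuous_minus g h : Rcontinuous g -> Rcontinuous h -> Rcontinuous (fun x => g x - h x).
Proof. intros Hg Hh. apply Rcontinuous_plus; [|apply Rcontinuous_opp]; assumption. Qed.

Lemma Rcontinuous_comp g h : Rcontinuous g -> Rcontinuous h -> Rcontinuous (fun x => h (g x)).
Proof. intros Hg Hh x. exact (continuous_comp g h x (Hg x) (Hh (g x))). Qed.

Lemma Rcontinuous_ext g h : (forall x, g x = h x) -> Rcontinuous g -> Rcontinuous h.
Proof. intros E Hg x. exact (continuous_ext g h x E (Hg x)). Qed.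

Lemma Rcontinuous_div_const g c : Rcontinuous g -> Rcontinuous (fun x => g x / c).
Proof. intros Hg. apply Rcontinuous_mult; [exact Hg | apply Rcontinuous_const]. Qed.

Lemma Rcontinuous_pow g n : Rcontinuous g -> Rcontinuous (fun x => g x ^ n).
Proof.
intros Hg. induction n as [|n IH]; simpl.
- apply Rcontinuous_const.
- now apply Rcontinuous_mult.
Qed.

Lemma Rcontinuous_lipschitz h L :
  (forall x y, Rabs (h x - h y) <= L * Rabs (x - y)) -> Rcontinuous h.
Proof.
intros H x. apply continuity_pt_filterlim. intros e He.
assert (HL : 0 <= L) by
  (specialize (H 1 0); pose proof (Rabs_pos (h 1 - h 0)); rewrite Rminus_0_r, Rabs_R1 in H; lra).
exists (e / (L + 1)). split; [apply Rdiv_lt_0_compat; lra|].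
intros y [_ Hy]. simpl in *. unfold R_dist in *.
apply Rle_lt_trans with (L * Rabs (y - x)); [apply H|].
apply Rle_lt_trans with ((L + 1) * Rabs (y - x)); [pose proof (Rabs_pos (y - x)); nra|].
apply Rmult_lt_reg_r with (/ (L + 1)); [apply Rinv_0_lt_compat; lra|].
replace ((L + 1) * Rabs (y - x) * / (L + 1)) with (Rabs (y - x)) by (field; lra). exact Hy.
Qed.

Lemma Rmax0_lipschitz x y : Rabs (Rmax x 0 - Rmax y 0) <= Rabs (x - y).
Proof. unfold Rmax. repeat destruct Rle_dec; apply Rabs_le; split_Rabs; lra. Qed.

Lemma Rcontinuous_Rmax0 g : Rcontinuous g -> Rcontinuous (fun x => Rmax (g x) 0).
Proof.
intros Hg. apply (Rcontinuous_comp g (fun y => Rmax y 0)); [exact Hg|].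
apply (Rcontinuous_lipschitz _ 1). intros x y. rewrite Rmult_1_l. apply Rmax0_lipschitz.
Qed.

Ltac Rcont :=
  repeat match goal with
  | |- Rcontinuous ?h => assumption
  | |- Rcontinuous (fun _ => _) => apply Rcontinuous_const
  | |- Rcontinuous (fun x => x) => apply Rcontinuous_id
  | |- Rcontinuous (fun x => _ + _) => apply Rcontinuous_plus
  | |- Rcontinuous (fun x => _ - _) => apply Rcontinuous_minus
  | |- Rcontinuous (fun x => _ * _) => apply Rcontinuous_mult
  | |- Rcontinuous (fun x => - _) => apply Rcontinuous_opp
  | |- Rcontinuous (fun x => _ / _) => apply Rcontinuous_div_const
  | |- Rcontinuous (fun x => _ ^ _) => apply Rcontinuous_pow
  | |- Rcontinuous (fun x => Rmax _ 0) => apply Rcontinuous_Rmax0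
  | |- Rcontinuous (Rplus ?a) => apply (Rcontinuous_plus (fun _ => a) (fun x => x))
  | |- Rcontinuous (Rminus ?a) => apply (Rcontinuous_minus (fun _ => a) (fun x => x))
  | |- Rcontinuous (Rmult ?a) => apply (Rcontinuous_mult (fun _ => a) (fun x => x))
  | |- Rcontinuous (fun x => ?h (@?g x)) => apply (Rcontinuous_comp g h)
  | |- Rcontinuous _ => solve [auto]
  end.

Definition clamp (T x : R) : R := Rmax 0 (Rmin x T).

Lemma clamp_in T x : 0 <= T -> 0 <= clamp T x <= T.
Proof. intros. unfold clamp, Rmax, Rmin. repeat destruct Rle_dec; lra. Qed.

Lemma clamp_id T x : 0 <= x <= T -> clamp T x = x.
Proof. intros. unfold clamp, Rmax, Rmin. repeat destruct Rle_dec; lra. Qed.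

Lemma clamp_lipschitz T x y : 0 <= T -> Rabs (clamp T x - clamp T y) <= Rabs (x - y).
Proof. intros. unfold clamp, Rmax, Rmin. repeat destruct Rle_dec; apply Rabs_le; split_Rabs; lra. Qed.

Lemma Rcontinuous_clamp T : 0 <= T -> Rcontinuous (clamp T).
Proof.
intros HT. apply (Rcontinuous_lipschitz _ 1). intros x y. rewrite Rmult_1_l. now apply clamp_lipschitz.
Qed.

Lemma cont_on_Rcontinuous (D : R -> Prop) g h :
  cont_on D g -> Rcontinuous h -> (forall x, D (h x)) -> Rcontinuous (fun x => g (h x)).
Proof.
intros Hg Hh HD x. apply filterlim_comp with (G := within D (locally (h x))).
- intros P HP. pose proof (Hh x _ HP) as Hh2. unfold filtermap in *.
  apply filter_imp with (2 := Hh2). intros y Hy. apply Hy, HD.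
- apply Hg, HD.
Qed.

Lemma Rcontinuous_unif g lo hi : Rcontinuous g -> forall e, 0 < e -> exists d, 0 < d /\
  forall x y, lo <= x <= hi -> lo <= y <= hi -> Rabs (x - y) < d -> Rabs (g x - g y) < e.
Proof.
intros Hg e He.
destruct (Heine g (fun c => lo <= c <= hi) (compact_P3 lo hi)) with (eps := mkposreal e He)
  as [d Hd].
{ intros x _. apply continuity_pt_filterlim, Hg. }
exists d. split; [apply cond_pos | auto].
Qed.

Lemma Rcontinuous_bounded g lo hi :
  Rcontinuous g -> exists M, 0 <= M /\ forall x, lo <= x <= hi -> g x <= M.
Proof.
intros Hg. destruct (Rle_or_lt lo hi) as [H|H].
- destruct (continuity_ab_maj g lo hi H) as [m [Hm _]].
  { intros x _. apply continuity_pt_filterlim, Hg. }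
  exists (Rmax (g m) 0). split; [apply Rmax_r|]. intros x Hx. eapply Rle_trans; [apply Hm, Hx | apply Rmax_l].
- exists 0. split; [lra|]. intros x Hx. lra.
Qed.

Lemma ex_RInt_Rcontinuous g a b : Rcontinuous g -> ex_RInt g a b.
Proof. intros H. apply (@ex_RInt_continuous R_CompleteNormedModule). intros; apply H. Qed.

(* [RInt] lands in the carrier of a normed module; [as_R_eq] exposes the
   equality as one in [R] so that [ring] and [field] recognise it. *)
Ltac as_R_eq := match goal with |- ?a = ?b => change (@eq R a b) end.

Lemma RInt_point_R g a : RInt g a a = 0.
Proof. exact (RInt_point a g). Qed.

Lemma RInt_const_R a b c : RInt (fun _ => c) a b = (b - a) * c.
Proof. exact (RInt_const a b c). Qed.

Lemma RInt_plus_Rcont g h a b : Rcontinuous g -> Rcontinuous h ->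
  RInt (fun x => g x + h x) a b = RInt g a b + RInt h a b.
Proof. intros Hg Hh. exact (RInt_plus _ _ a b (ex_RInt_Rcontinuous g a b Hg) (ex_RInt_Rcontinuous h a b Hh)). Qed.

Lemma RInt_minus_Rcont g h a b : Rcontinuous g -> Rcontinuous h ->
  RInt (fun x => g x - h x) a b = RInt g a b - RInt h a b.
Proof. intros Hg Hh. exact (RInt_minus _ _ a b (ex_RInt_Rcontinuous g a b Hg) (ex_RInt_Rcontinuous h a b Hh)). Qed.

Lemma RInt_scal_Rcont g k a b : Rcontinuous g -> RInt (fun x => k * g x) a b = k * RInt g a b.
Proof. intros Hg. exact (RInt_scal _ a b k (ex_RInt_Rcontinuous g a b Hg)). Qed.

Lemma RInt_Chasles_Rcont g a b c : Rcontinuous g -> RInt g a b + RInt g b c = RInt g a c.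
Proof. intros Hg. exact (RInt_Chasles g a b c (ex_RInt_Rcontinuous g a b Hg) (ex_RInt_Rcontinuous g b c Hg)). Qed.

Lemma RInt_le_Rcont g h a b : a <= b -> Rcontinuous g -> Rcontinuous h ->
  (forall x, a <= x <= b -> g x <= h x) -> RInt g a b <= RInt h a b.
Proof.
intros. apply RInt_le; [lra | now apply ex_RInt_Rcontinuous.. | intros; apply H2; lra].
Qed.

Lemma RInt_ge0_Rcont g a b : a <= b -> Rcontinuous g ->
  (forall x, a <= x <= b -> 0 <= g x) -> 0 <= RInt g a b.
Proof.
intros. apply RInt_ge_0; [lra | now apply ex_RInt_Rcontinuous | intros; apply H1; lra].
Qed.

Lemma RInt_abs_le_Rcont g a b M : a <= b -> Rcontinuous g ->
  (forall x, a <= x <= b -> Rabs (g x) <= M) -> Rabs (RInt g a b) <= (b - a) * M.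
Proof. intros. apply abs_RInt_le_const; auto. now apply ex_RInt_Rcontinuous. Qed.

Lemma RInt_ext_R (g h : R -> R) a b : (forall x, g x = h x) -> RInt g a b = RInt h a b.
Proof. intros H. apply RInt_ext. intros; apply H. Qed.

Lemma RInt_ext_Icc (g h : R -> R) a b :
  a <= b -> (forall s, a <= s <= b -> g s = h s) -> RInt g a b = RInt h a b.
Proof.
intros Hab H. apply RInt_ext. intros x Hx.
rewrite Rmin_left, Rmax_right in Hx by lra. apply H; lra.
Qed.

Lemma RInt_antiderivative (F g : R -> R) a b :
  (forall x, is_derive F x (g x)) -> Rcontinuous g -> RInt g a b = F b - F a.
Proof.
intros HF Hg. apply is_RInt_unique.
exact (is_RInt_derive F g a b (fun x _ => HF x) (fun x _ => Hg x)).
Qed.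

Lemma is_derive_RInt0 g x : Rcontinuous g -> is_derive (fun y => RInt g 0 y) x (g x).
Proof.
intros H. apply (is_derive_RInt g (fun y => RInt g 0 y) 0 x); [|apply H].
apply filter_forall. intros y. apply (@RInt_correct R_CompleteNormedModule).
now apply ex_RInt_Rcontinuous.
Qed.

Lemma Rcontinuous_RInt0 g : Rcontinuous g -> Rcontinuous (fun y => RInt g 0 y).
Proof.
intros H x. apply (@ex_derive_continuous R_AbsRing R_NormedModule).
eexists. now apply is_derive_RInt0.
Qed.

Lemma RInt0_le g t t' : Rcontinuous g -> (forall s, t <= s <= t' -> 0 <= g s) -> t <= t' ->
  RInt g 0 t <= RInt g 0 t'.
Proof.
intros Hg Hp Htt. rewrite <- (RInt_Chasles_Rcont g 0 t t') by auto.
assert (0 <= RInt g t t') by now apply RInt_ge0_Rcont. lra.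
Qed.

Lemma RInt_mean_nondecreasing G T t : Rcontinuous G -> 0 <= t <= T ->
  (forall x y, 0 <= x <= y -> y <= T -> G x <= G y) -> T * RInt G 0 t <= t * RInt G 0 T.
Proof.
intros HG Ht Hm.
rewrite <- (RInt_Chasles_Rcont G 0 t T) by auto.
assert (A1 : RInt G 0 t <= RInt (fun _ => G t) 0 t)
  by (apply RInt_le_Rcont; [lra | auto | apply Rcontinuous_const | intros; apply Hm; lra]).
assert (A2 : RInt (fun _ => G t) t T <= RInt G t T)
  by (apply RInt_le_Rcont; [lra | apply Rcontinuous_const | auto | intros; apply Hm; lra]).
rewrite !RInt_const_R in *.
assert ((T - t) * RInt G 0 t <= (T - t) * ((t - 0) * G t)) by (apply Rmult_le_compat_l; lra).
assert (t * ((T - t) * G t) <= t * RInt G t T) by (apply Rmult_le_compat_l; lra).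
nra.
Qed.

Lemma is_derive_eq (f : R -> R) x l l' : is_derive f x l -> l = l' -> is_derive f x l'.
Proof. now intros H <-. Qed.

Definition RInt2 (g : R -> R) (t : R) : R := RInt (fun u => RInt g 0 u) 0 t.

Lemma Rcontinuous_RInt2 g : Rcontinuous g -> Rcontinuous (RInt2 g).
Proof. intros H. now apply Rcontinuous_RInt0, Rcontinuous_RInt0. Qed.

Lemma RInt2_0 g : RInt2 g 0 = 0.
Proof. apply RInt_point_R. Qed.

Lemma RInt2_ext g h t : (forall s, g s = h s) -> RInt2 g t = RInt2 h t.
Proof. intros H. apply RInt_ext_R. intros x. now apply RInt_ext_R. Qed.

Lemma RInt2_ext_Icc g h T t : 0 <= t <= T -> (forall s, 0 <= s <= T -> g s = h s) ->
  RInt2 g t = RInt2 h t.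
Proof.
intros Ht H. apply RInt_ext_Icc; [lra|]. intros x Hx.
apply RInt_ext_Icc; [lra|]. intros s Hs. apply H; lra.
Qed.

Lemma RInt2_moment g x : Rcontinuous g ->
  RInt2 g x = x * RInt g 0 x - RInt (fun s => s * g s) 0 x.
Proof.
intros Hg. unfold RInt2.
rewrite (RInt_antiderivative (fun y => y * RInt g 0 y - RInt (fun s => s * g s) 0 y)).
- rewrite !RInt_point_R. ring.
- intros y.
  pose proof (is_derive_mult (fun y => y) (fun y => RInt g 0 y) y 1 (g y)
    (is_derive_id y) (is_derive_RInt0 g y Hg) Rmult_comm) as D1.
  assert (D2 : is_derive (fun y => RInt (fun s => s * g s) 0 y) y (y * g y))
    by (apply (is_derive_RInt0 (fun s => s * g s)); Rcont).
  apply (is_derive_eq _ _ _ _ (is_derive_minus _ _ y _ _ D1 D2)).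
  change (@eq R (1 * RInt g 0 y + y * g y - y * g y) (RInt g 0 y)). ring.
- now apply Rcontinuous_RInt0.
Qed.

Lemma RInt2_kernel g x : Rcontinuous g -> RInt2 g x = RInt (fun s => (x - s) * g s) 0 x.
Proof.
intros Hg. rewrite RInt2_moment by auto.
rewrite (RInt_ext_R (fun s => (x - s) * g s) (fun s => x * g s - s * g s)) by (intros; ring).
rewrite RInt_minus_Rcont, RInt_scal_Rcont by Rcont. reflexivity.
Qed.

Lemma RInt_RInt2_kernel g x : Rcontinuous g ->
  RInt (RInt2 g) 0 x = RInt (fun s => (x - s) ^ 2 / 2 * g s) 0 x.
Proof.
intros Hg.
rewrite (RInt_antiderivative (fun y => y ^ 2 / 2 * RInt g 0 y - y * RInt (fun s => s * g s) 0 y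
                                       + / 2 * RInt (fun s => s ^ 2 * g s) 0 y)).
- rewrite (RInt_ext_R (fun s => (x - s) ^ 2 / 2 * g s)
             (fun s => x ^ 2 / 2 * g s - x * (s * g s) + / 2 * (s ^ 2 * g s))) by (intros; field).
  rewrite RInt_plus_Rcont, RInt_minus_Rcont, !RInt_scal_Rcont, !RInt_point_R by Rcont. as_R_eq. ring.
- intros y. rewrite RInt2_moment by auto.
  assert (Dsq : is_derive (fun y => y ^ 2 / 2) y y) by (auto_derive; [auto | field]).
  pose proof (is_derive_mult _ _ y _ _ Dsq (is_derive_RInt0 g y Hg) Rmult_comm) as D1.
  assert (D2 : is_derive (fun y => RInt (fun s => s * g s) 0 y) y (y * g y))
    by (apply (is_derive_RInt0 (fun s => s * g s)); Rcont).
  pose proof (is_derive_mult _ _ y _ _ (is_derive_id y) D2 Rmult_comm) as D3.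
  assert (D4 : is_derive (fun y => RInt (fun s => s ^ 2 * g s) 0 y) y (y ^ 2 * g y))
    by (apply (is_derive_RInt0 (fun s => s ^ 2 * g s)); Rcont).
  pose proof (is_derive_scal _ y (/ 2) _ D4) as D5.
  apply (is_derive_eq _ _ _ _ (is_derive_plus _ _ y _ _ (is_derive_minus _ _ y _ _ D1 D3) D5)).
  change (@eq R (y * RInt g 0 y + y ^ 2 / 2 * g y - (1 * RInt (fun s => s * g s) 0 y + y * (y * g y))
                 + / 2 * (y ^ 2 * g y))
                (y * RInt g 0 y - RInt (fun s => s * g s) 0 y)).
  field.
- now apply Rcontinuous_RInt2.
Qed.

Lemma RInt2_le g t t' : Rcontinuous g -> (forall s, 0 <= s -> 0 <= g s) -> 0 <= t <= t' ->
  RInt2 g t <= RInt2 g t'.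
Proof.
intros Hg Hp Ht. apply RInt0_le; [now apply Rcontinuous_RInt0 | | lra].
intros s Hs. pose proof (RInt0_le g 0 s Hg) as H0. rewrite RInt_point_R in H0.
apply H0; [intros; apply Hp |]; lra.
Qed.

Lemma RInt2_nonneg g t : Rcontinuous g -> (forall s, 0 <= s -> 0 <= g s) -> 0 <= t ->
  0 <= RInt2 g t.
Proof. intros. rewrite <- (RInt2_0 g). apply RInt2_le; auto; lra. Qed.

Lemma RInt2_dist g h T e : 0 <= T -> Rcontinuous g -> Rcontinuous h ->
  (forall s, 0 <= s <= T -> Rabs (g s - h s) <= e) ->
  forall t, 0 <= t <= T -> Rabs (RInt2 g t - RInt2 h t) <= T * (T * e).
Proof.
intros HT Hg Hh He t Ht. unfold RInt2.
assert (He0 : 0 <= e) by (specialize (He 0); pose proof (Rabs_pos (g 0 - h 0)); lra).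
rewrite <- RInt_minus_Rcont by (now apply Rcontinuous_RInt0).
eapply Rle_trans.
- apply RInt_abs_le_Rcont with (M := T * e); [lra | apply Rcontinuous_minus; now apply Rcontinuous_RInt0 |].
  intros x Hx. rewrite <- RInt_minus_Rcont by auto.
  eapply Rle_trans; [apply RInt_abs_le_Rcont with (M := e); [lra | Rcont | intros; apply He; lra] |].
  apply Rmult_le_compat_r; lra.
- apply Rmult_le_compat_r; nra.
Qed.

Lemma RInt2_lipschitz g T B t t' : 0 <= T -> Rcontinuous g ->
  (forall s, 0 <= s <= T -> 0 <= g s <= B) -> 0 <= t <= T -> 0 <= t' <= T ->
  Rabs (RInt2 g t - RInt2 g t') <= T * B * Rabs (t - t').
Proof.
intros HT Hg Hb.
assert (key : forall x y, 0 <= x <= y -> y <= T -> Rabs (RInt2 g y - RInt2 g x) <= T * B * (y - x)).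
{ intros x y Hxy HyT. unfold RInt2. rewrite <- (RInt_Chasles_Rcont _ 0 x y) by (now apply Rcontinuous_RInt0).
  rewrite Rplus_minus_l.
  rewrite Rmult_comm. apply RInt_abs_le_Rcont; [lra | now apply Rcontinuous_RInt0 |].
  intros u Hu. assert (0 <= B) by (specialize (Hb 0); lra).
  assert (0 <= RInt g 0 u).
  { pose proof (RInt0_le g 0 u Hg) as H0. rewrite RInt_point_R in H0. apply H0; [intros; apply Hb |]; lra. }
  assert (RInt g 0 u <= RInt (fun _ => B) 0 u)
    by (apply RInt_le_Rcont; [lra | auto | apply Rcontinuous_const | intros; apply Hb; lra]).
  rewrite RInt_const_R in H1. rewrite Rabs_right by lra. nra. }
intros Ht Ht'. destruct (Rle_dec t t').
- rewrite Rabs_minus_sym, (Rabs_minus_sym t t'), (Rabs_right (t' - t)) by lra. apply key; lra.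
- rewrite (Rabs_right (t - t')) by lra. apply key; lra.
Qed.

Lemma RInt2_bound g T B t : 0 <= T -> Rcontinuous g -> (forall s, 0 <= s <= T -> 0 <= g s <= B) ->
  0 <= t <= T -> RInt2 g t <= T * (T * B).
Proof.
intros HT Hg Hb Ht. assert (HB : 0 <= B) by (specialize (Hb 0); lra).
pose proof (RInt2_lipschitz g T B t 0 HT Hg Hb Ht ltac:(lra)) as Hlip.
rewrite RInt2_0, !Rminus_0_r, (Rabs_right t) in Hlip by lra. apply Rabs_le_between in Hlip.
assert (T * B * t <= T * B * T) by (apply Rmult_le_compat_l; [apply Rmult_le_pos|]; lra).
nra.
Qed.

(** * Ultrafilter limits of functions *)

Definition ultra_unif (U : (nat -> Prop) -> Prop) (u : nat -> R -> R) (w : R -> R) (T : R) : Prop :=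
  forall e, 0 < e -> U (fun n => forall t, 0 <= t <= T -> Rabs (u n t - w t) < e).

Lemma grid_point T m t : 0 < T -> (0 < m)%nat -> 0 <= t <= T ->
  exists i, (i <= m)%nat /\ Rabs (t - INR i * (T / INR m)) <= T / INR m.
Proof.
intros HT Hm Ht.
assert (Hpos : 0 < INR m) by (apply lt_0_INR; auto).
assert (Hh : 0 < T / INR m) by (apply Rdiv_lt_0_compat; auto).
assert (key : forall j, (j <= m)%nat -> t <= INR j * (T / INR m) ->
          exists i, (i <= m)%nat /\ Rabs (t - INR i * (T / INR m)) <= T / INR m).
{ induction j as [|j IH]; intros Hj Htj.
  - exists 0%nat. split; [lia|]. simpl in *. rewrite Rmult_0_l, Rminus_0_r, Rabs_right; lra.
  - destruct (Rle_dec t (INR j * (T / INR m))); [apply IH; auto; lia|].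
    exists (S j). split; auto. rewrite S_INR in *. apply Rabs_le. split; nra. }
apply (key m); [lia|]. replace (INR m * (T / INR m)) with T by (field; lra). lra.
Qed.

Section UltraLimits.

Variable U : (nat -> Prop) -> Prop.
Hypothesis HU : ultrafilter_nat U.
Variables (u : nat -> R -> R) (T L lo hi : R).
Hypotheses (HT : 0 < T) (HL : 0 <= L)
  (Hbnd : forall n t, 0 <= t <= T -> lo <= u n t <= hi)
  (Hlip : forall n t t', 0 <= t <= T -> 0 <= t' <= T -> Rabs (u n t - u n t') <= L * Rabs (t - t')).

Lemma ultra_limit_function : exists uL,
  (forall t, lo <= uL t <= hi) /\ (forall t, 0 <= t <= T -> ultra_cvg U (fun n => u n t) (uL t)) /\
  (forall x y, Rabs (uL x - uL y) <= L * Rabs (x - y)).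
Proof.
assert (Hex : forall t, exists l, lo <= l <= hi /\ ultra_cvg U (fun n => u n (clamp T t)) l).
{ intros t. apply ultra_cvg_exists; auto. intros n. apply Hbnd, clamp_in. lra. }
destruct (functional_choice _ Hex) as [uL HuL].
assert (Hcvg : forall t, ultra_cvg U (fun n => u n (clamp T t)) (uL t)) by apply HuL.
exists uL. split; [apply HuL|]. split.
- intros t Ht. pose proof (Hcvg t) as H. now rewrite clamp_id in H.
- intros x y. apply Rle_plus_epsilon. intros e He.
  assert (He2 : 0 < e / 2) by lra.
  destruct (ultra_witness U HU _ (ultra_and _ HU _ _ (Hcvg x _ He2) (Hcvg y _ He2))) as [n [h1 h2]].
  assert (Hc := clamp_lipschitz T x y ltac:(lra)).
  assert (Hn := Hlip n (clamp T x) (clamp T y) (clamp_in T x ltac:(lra)) (clamp_in T y ltac:(lra))).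
  apply Rabs_le_between in Hn. apply Rabs_def2 in h1. apply Rabs_def2 in h2.
  apply Rabs_le. nra.
Qed.

(* Equi-Lipschitz functions converging at the points of a fine grid converge uniformly. *)
Lemma ultra_cvg_uniform (uL : R -> R) :
  (forall t, 0 <= t <= T -> ultra_cvg U (fun n => u n t) (uL t)) ->
  (forall x y, Rabs (uL x - uL y) <= L * Rabs (x - y)) ->
  ultra_unif U u uL T.
Proof.
intros Hpt HLip e He.
assert (He3 : 0 < e / (3 * (T * L + 1))) by (apply Rdiv_lt_0_compat; nra).
destruct (archimed_cor1 _ He3) as [m [Hm Hm0]].
assert (Hpos : 0 < INR m) by (apply lt_0_INR; auto).
set (h := T / INR m).
assert (Hh : L * h < e / 3).
{ unfold h. replace (L * (T / INR m)) with ((T * L) * / INR m) by (field; lra).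
  apply Rle_lt_trans with ((T * L + 1) * / INR m).
  { apply Rmult_le_compat_r; [left; apply Rinv_0_lt_compat|]; lra. }
  apply Rlt_le_trans with ((T * L + 1) * (e / (3 * (T * L + 1)))); [apply Rmult_lt_compat_l; nra|].
  right. field. nra. }
assert (Hgrid : forall i, (i <= m)%nat -> 0 <= INR i * h <= T).
{ intros i Hi. assert (INR i <= INR m) by (apply le_INR; auto). pose proof (pos_INR i).
  assert (0 < h) by (apply Rdiv_lt_0_compat; auto).
  assert (INR m * h = T) by (unfold h; field; lra). split; nra. }
apply (ultra_impl _ HU (fun n => forall i, (i <= m)%nat -> Rabs (u n (INR i * h) - uL (INR i * h)) < e / 3)).
- intros n Hn t Ht. destruct (grid_point T m t HT Hm0 Ht) as [i [Hi Hti]]. fold h in Hti.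
  specialize (Hn i Hi). specialize (Hgrid i Hi).
  assert (A1 := Hlip n t (INR i * h) Ht Hgrid). assert (A2 := HLip (INR i * h) t).
  rewrite (Rabs_minus_sym (INR i * h) t) in A2.
  assert (L * Rabs (t - INR i * h) <= L * h) by (apply Rmult_le_compat_l; auto).
  apply Rabs_le_between in A1. apply Rabs_le_between in A2. apply Rabs_def2 in Hn. apply Rabs_def1; lra.
- apply ultra_forall_le; auto. intros i Hi. apply Hpt; [apply Hgrid; auto | lra].
Qed.

End UltraLimits.

Section UltraCalculus.

Variable U : (nat -> Prop) -> Prop.
Hypothesis HU : ultrafilter_nat U.

Lemma ultra_cvg_ext x y l : (forall n, x n = y n) -> ultra_cvg U x l -> ultra_cvg U y l.
Proof.
intros E H e He. eapply (ultra_impl _ HU); [| exact (H e He)]. intros n. cbv beta. now rewrite E.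
Qed.

Lemma ultra_cvg_minus x y a b :
  ultra_cvg U x a -> ultra_cvg U y b -> ultra_cvg U (fun n => x n - y n) (a - b).
Proof.
intros Hx Hy e He.
apply (ultra_impl _ HU (fun n => Rabs (x n - a) < e / 2 /\ Rabs (y n - b) < e / 2));
  [| apply (ultra_and _ HU); [apply Hx | apply Hy]; lra].
intros n [h1 h2]. apply Rabs_def2 in h1. apply Rabs_def2 in h2. apply Rabs_def1; lra.
Qed.

Lemma ultra_cvg_scal x a k : ultra_cvg U x a -> ultra_cvg U (fun n => k * x n) (k * a).
Proof.
intros Hx e He.
apply (ultra_impl _ HU (fun n => Rabs (x n - a) < e / (Rabs k + 1)));
  [| apply Hx, Rdiv_lt_0_compat; [lra | pose proof (Rabs_pos k); lra]].
intros n Hn. rewrite <- Rmult_minus_distr_l, Rabs_mult.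
pose proof (Rabs_pos k). pose proof (Rabs_pos (x n - a)).
apply Rle_lt_trans with ((Rabs k + 1) * Rabs (x n - a)); [nra|].
apply Rmult_lt_reg_r with (/ (Rabs k + 1)); [apply Rinv_0_lt_compat; lra|].
replace ((Rabs k + 1) * Rabs (x n - a) * / (Rabs k + 1)) with (Rabs (x n - a)) by (field; lra).
exact Hn.
Qed.

Lemma ultra_unif_at u w T t : ultra_unif U u w T -> 0 <= t <= T -> ultra_cvg U (fun n => u n t) (w t).
Proof. intros H Ht e He. apply (ultra_impl _ HU _ _ (fun n Hn => Hn t Ht)), H, He. Qed.

Lemma ultra_unif_RInt u w T b : (forall n, Rcontinuous (u n)) -> Rcontinuous w ->
  ultra_unif U u w T -> 0 <= b <= T -> ultra_cvg U (fun n => RInt (u n) 0 b) (RInt w 0 b).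
Proof.
intros Hu Hw H Hb e He.
eapply (ultra_impl _ HU); [| exact (H (e / (b + 1)) ltac:(apply Rdiv_lt_0_compat; lra))].
intros n Hn; cbv beta in Hn. rewrite <- RInt_minus_Rcont by auto.
eapply Rle_lt_trans; [apply (RInt_abs_le_Rcont _ 0 b (e / (b + 1))); [lra | Rcont |] |].
- intros x Hx. left. apply Hn. lra.
- apply Rmult_lt_reg_r with (b + 1); [lra|]. field_simplify; nra.
Qed.

Lemma ultra_unif_RInt2 g G T t : 0 <= T -> (forall n, Rcontinuous (g n)) -> Rcontinuous G ->
  ultra_unif U g G T -> 0 <= t <= T -> ultra_cvg U (fun n => RInt2 (g n) t) (RInt2 G t).
Proof.
intros HT Hg HG H Ht e He.
eapply (ultra_impl _ HU); [| exact (H (e / (T * T + 1)) ltac:(apply Rdiv_lt_0_compat; nra))].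
intros n Hn; cbv beta in Hn. eapply Rle_lt_trans.
- apply (RInt2_dist _ _ T (e / (T * T + 1))); auto. intros s Hs. left. now apply Hn.
- replace (T * (T * (e / (T * T + 1)))) with (T * T * e / (T * T + 1)) by (field; nra).
  apply Rmult_lt_reg_r with (T * T + 1); [nra|]. field_simplify; nra.
Qed.

End UltraCalculus.

Lemma RInt2_chord g T x : Rcontinuous g -> (forall s, 0 <= s -> 0 <= g s) -> 0 <= x <= T ->
  T * RInt2 g x <= x * RInt2 g T.
Proof.
intros Hg Hp Hx. apply RInt_mean_nondecreasing; auto; [now apply Rcontinuous_RInt0 |].
intros u v Huv _. apply RInt0_le; auto. intros; apply Hp; lra. lra.
Qed.

Definition kappa (T eta alpha : R) : R := alpha * eta * (2 * T - eta) / (2 * T - alpha * eta ^ 2).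

(* Concavity: RInt2 g lies below its chord on [0, T], which bounds both terms of
   the nonlocal condition by RInt2 g T. *)
Lemma concave_lower_bound T al eta g c : Rcontinuous g -> (forall s, 0 <= s -> 0 <= g s) ->
  0 < al -> 0 < eta < T -> al * eta < 1 ->
  al * (eta * c - RInt (RInt2 g) 0 eta) <= c - RInt2 g T ->
  forall t, 0 <= t <= T -> kappa T eta al * c <= c - RInt2 g t.
Proof.
intros Hg Hp Hal Heta Hae Hbc t Ht.
set (I := RInt2 g T) in *.
assert (HJ : RInt (RInt2 g) 0 eta <= RInt (fun x => x / T * I) 0 eta).
{ apply RInt_le_Rcont; [lra | now apply Rcontinuous_RInt2 | Rcont |].
  intros x Hx. apply Rmult_le_reg_l with T; [lra|].
  replace (T * (x / T * I)) with (x * I) by (field; lra). apply RInt2_chord; auto; lra. }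
rewrite (RInt_antiderivative (fun x => x ^ 2 / (2 * T) * I) (fun x => x / T * I)) in HJ;
  [| intros x; auto_derive; [auto | field; lra] | Rcont].
assert (Hmono : RInt2 g t <= I) by (apply RInt2_le; auto; lra).
assert (Hpos : 0 < 2 * T - al * eta ^ 2) by nra.
assert (HI : I * (2 * T - al * eta ^ 2) <= c * (1 - al * eta) * (2 * T)).
{ assert (al * RInt (RInt2 g) 0 eta <= al * (eta ^ 2 / (2 * T) * I - 0 ^ 2 / (2 * T) * I))
    by (apply Rmult_le_compat_l; lra).
  replace (0 ^ 2 / (2 * T) * I) with 0 in H by (field; lra).
  assert (E : al * (eta ^ 2 / (2 * T) * I - 0) * (2 * T) = al * eta ^ 2 * I) by (field; lra).
  nra. }
unfold kappa. apply Rmult_le_reg_r with (2 * T - al * eta ^ 2); [exact Hpos|].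
replace (al * eta * (2 * T - eta) / (2 * T - al * eta ^ 2) * c * (2 * T - al * eta ^ 2))
  with (c * (al * eta * (2 * T - eta))) by (field; lra).
nra.
Qed.

(** * Shooting on delayed problems *)

Definition delayed (d s : R) : R := Rmax (s - d) 0.

Lemma delayed_in d T s : 0 < d -> 0 <= s <= T -> 0 <= delayed d s <= T.
Proof. intros. unfold delayed. split; [apply Rmax_r | apply Rmax_lub; lra]. Qed.

Lemma delayed_close d s : 0 < d -> 0 <= s -> Rabs (delayed d s - s) <= d.
Proof. intros. unfold delayed, Rmax. destruct Rle_dec; apply Rabs_le; lra. Qed.

Lemma Rcontinuous_delayed d : Rcontinuous (delayed d).
Proof. unfold delayed. Rcont. Qed.

Lemma step_size_pos T n : 0 < T -> 0 < T / INR (S n).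
Proof. intros. apply Rdiv_lt_0_compat; [lra | apply lt_0_INR; lia]. Qed.

Lemma step_size_cover T n : 0 < T -> T <= INR (S n) * (T / INR (S n)).
Proof. intros. right. field. apply not_0_INR. lia. Qed.

Lemma step_size_vanish T : 0 < T -> forall e, 0 < e -> exists N, forall n, (N <= n)%nat -> T / INR (S n) < e.
Proof.
intros HT e He. destruct (archimed_cor1 (e / T)) as [N [HN HN0]]; [apply Rdiv_lt_0_compat; lra|].
exists N. intros n Hn.
assert (0 < INR N) by (apply lt_0_INR; auto).
assert (INR N <= INR (S n)) by (apply le_INR; lia).
assert (/ INR (S n) <= / INR N) by (apply Rinv_le_contravar; auto).
apply Rle_lt_trans with (T * / INR N); [unfold Rdiv; apply Rmult_le_compat_l; lra|].
replace e with (T * (e / T)) by (field; lra). apply Rmult_lt_compat_l; lra.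
Qed.

Section DelayedIteration.

Variables (ab Fe : R -> R) (T A : R).
Hypotheses (HT : 0 <= T) (Hab : Rcontinuous ab) (HF : Rcontinuous Fe)
  (Hab0 : forall s, 0 <= ab s) (HF0 : forall x, 0 <= Fe x)
  (HabA : forall s, 0 <= s <= T -> ab s <= A).

Lemma A_nonneg : 0 <= A.
Proof. specialize (HabA 0); specialize (Hab0 0); lra. Qed.

(* Method of steps: with delay d > 0, the k-th iterate solves
   u'' = - ab * Fe (u (. - d)), u(0) = c, u'(0) = 0 exactly on [0, k d],
   since the right-hand side only reads u on [0, (k - 1) d]. *)
Fixpoint delayed_iter (d c : R) (k : nat) : R -> R :=
  match k with
  | O => fun _ => c
  | S k => fun t => c - RInt2 (fun s => ab s * Fe (delayed_iter d c k (delayed d s))) t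
  end.

Definition delayed_rhs d c k s : R := ab s * Fe (delayed_iter d c k (delayed d s)).

Lemma delayed_iter_S d c k t : delayed_iter d c (S k) t = c - RInt2 (delayed_rhs d c k) t.
Proof. reflexivity. Qed.

Lemma Rcontinuous_delayed_iter d c k : Rcontinuous (delayed_iter d c k).
Proof.
induction k as [|k IH]; simpl; [apply Rcontinuous_const|].
apply Rcontinuous_minus; [apply Rcontinuous_const|]. apply Rcontinuous_RInt2.
pose proof (Rcontinuous_delayed d). Rcont.
Qed.

Lemma Rcontinuous_delayed_rhs d c k : Rcontinuous (delayed_rhs d c k).
Proof.
unfold delayed_rhs. pose proof (Rcontinuous_delayed d). pose proof (Rcontinuous_delayed_iter d c k).
Rcont.
Qed.

Lemma delayed_rhs_nonneg d c k s : 0 <= delayed_rhs d c k s.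
Proof. apply Rmult_le_pos; auto. Qed.

Lemma delayed_iter_stable d c k t : 0 < d -> 0 <= t <= INR k * d ->
  delayed_iter d c (S k) t = delayed_iter d c k t.
Proof.
intros Hd. revert t. induction k as [|k IH]; intros t Ht.
- simpl in Ht. replace t with 0 by lra. simpl. rewrite RInt2_0. ring.
- rewrite !delayed_iter_S. f_equal. rewrite S_INR in Ht.
  apply (RInt2_ext_Icc _ _ t); [lra|]. intros s Hs. unfold delayed_rhs.
  rewrite IH; [reflexivity|]. unfold delayed. split; [apply Rmax_r|].
  pose proof (pos_INR k). apply Rmax_lub; nra.
Qed.

Lemma delayed_iter_le d c k t : 0 <= t -> delayed_iter d c k t <= c.
Proof.
intros Ht. destruct k; [simpl; lra|]. rewrite delayed_iter_S.
pose proof (RInt2_nonneg _ t (Rcontinuous_delayed_rhs d c k) (fun s _ => delayed_rhs_nonneg d c k s) Ht).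
lra.
Qed.

Lemma delayed_rhs_bound d c k M C : 0 < d -> (forall x, x <= C -> Fe x <= M) -> c <= C ->
  forall s, 0 <= s <= T -> 0 <= delayed_rhs d c k s <= A * M.
Proof.
intros Hd HM Hc s Hs. split; [apply delayed_rhs_nonneg|]. unfold delayed_rhs.
assert (delayed_iter d c k (delayed d s) <= c) by (apply delayed_iter_le, delayed_in with T; auto).
apply Rmult_le_compat; auto. apply HM. lra.
Qed.

Lemma delayed_iter_ge d c k M C t : 0 < d -> 0 <= M -> (forall x, x <= C -> Fe x <= M) -> c <= C ->
  0 <= t <= T -> c - T * (T * (A * M)) <= delayed_iter d c k t.
Proof.
intros Hd HM HFM Hc Ht. pose proof A_nonneg as HA.
destruct k.
- assert (0 <= T * (T * (A * M))) by (repeat apply Rmult_le_pos; auto). simpl; lra.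
- rewrite delayed_iter_S. pose proof (RInt2_bound _ T (A * M) t HT (Rcontinuous_delayed_rhs d c k)
    (delayed_rhs_bound d c k M C Hd HFM Hc) Ht).
  lra.
Qed.

Lemma delayed_iter_lipschitz d c k M C t t' : 0 < d -> 0 <= M -> (forall x, x <= C -> Fe x <= M) ->
  c <= C -> 0 <= t <= T -> 0 <= t' <= T ->
  Rabs (delayed_iter d c k t - delayed_iter d c k t') <= T * (A * M) * Rabs (t - t').
Proof.
intros Hd HM HFM Hc Ht Ht'. pose proof A_nonneg as HA.
destruct k.
- simpl. rewrite Rminus_diag, Rabs_R0. pose proof (Rabs_pos (t - t')).
  assert (0 <= T * (A * M)) by (repeat apply Rmult_le_pos; auto). nra.
- rewrite !delayed_iter_S.
  replace (c - RInt2 (delayed_rhs d c k) t - (c - RInt2 (delayed_rhs d c k) t'))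
    with (RInt2 (delayed_rhs d c k) t' - RInt2 (delayed_rhs d c k) t) by ring.
  rewrite Rabs_minus_sym.
  apply RInt2_lipschitz; auto. apply Rcontinuous_delayed_rhs. exact (delayed_rhs_bound d c k M C Hd HFM Hc).
Qed.

Hypothesis HFbnd : forall C, exists M, 0 <= M /\ forall x, x <= C -> Fe x <= M.

Lemma delayed_iter_continuous_c d k : 0 < d -> forall c0 e, 0 < e -> exists dl, 0 < dl /\
  forall c, Rabs (c - c0) < dl -> forall t, 0 <= t <= T ->
  Rabs (delayed_iter d c k t - delayed_iter d c0 k t) < e.
Proof.
intros Hd. pose proof A_nonneg as HA.
induction k as [|k IH]; intros c0 e He.
{ exists e. split; auto. }
destruct (HFbnd (c0 + 1)) as [M [HM HFM]].
set (lo := c0 - 1 - T * (T * (A * M))).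
set (e1 := e / (2 * (T * (T * A) + 1))).
assert (HTA : 0 <= T * (T * A)) by (repeat apply Rmult_le_pos; auto).
assert (He1 : 0 < e1) by (apply Rdiv_lt_0_compat; lra).
destruct (Rcontinuous_unif Fe lo (c0 + 1) HF e1 He1) as [d1 [Hd1 Hu]].
destruct (IH c0 d1 Hd1) as [d2 [Hd2 H2]].
exists (Rmin d2 (Rmin 1 (e / 2))). split; [repeat apply Rmin_pos; lra|].
intros c Hc t Ht. apply Rmin_Rgt in Hc as [Hc2 Hc]. apply Rmin_Rgt in Hc as [Hc1 Hce].
assert (Hrange : forall c', Rabs (c' - c0) < 1 -> forall s, 0 <= s <= T ->
          lo <= delayed_iter d c' k (delayed d s) <= c0 + 1).
{ intros c' Hc' s Hs. apply Rabs_def2 in Hc'. pose proof (delayed_in d T s Hd Hs).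
  pose proof (delayed_iter_ge d c' k M (c0 + 1) (delayed d s) Hd HM HFM ltac:(lra) H).
  pose proof (delayed_iter_le d c' k (delayed d s) (proj1 H)). unfold lo. lra. }
assert (Hdi : Rabs (RInt2 (delayed_rhs d c k) t - RInt2 (delayed_rhs d c0 k) t) <= T * (T * (A * e1))).
{ apply RInt2_dist; auto; try apply Rcontinuous_delayed_rhs.
  intros s Hs. unfold delayed_rhs. rewrite <- Rmult_minus_distr_l, Rabs_mult, (Rabs_right (ab s))
    by (apply Rle_ge; auto).
  apply Rmult_le_compat; auto using Rabs_pos. left. apply Hu.
  - now apply Hrange.
  - apply Hrange; [rewrite Rminus_diag, Rabs_R0; lra | exact Hs].
  - apply H2; [exact Hc2 | now apply delayed_in]. }
assert (T * (T * (A * e1)) < e / 2).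
{ replace (T * (T * (A * e1))) with (T * (T * A) * e1) by ring. unfold e1.
  apply Rmult_lt_reg_r with (2 * (T * (T * A) + 1)); [lra|]. field_simplify; nra. }
rewrite !delayed_iter_S.
replace (c - RInt2 (delayed_rhs d c k) t - (c0 - RInt2 (delayed_rhs d c0 k) t))
  with ((c - c0) - (RInt2 (delayed_rhs d c k) t - RInt2 (delayed_rhs d c0 k) t)) by ring.
eapply Rle_lt_trans; [apply Rabs_triang|]. rewrite Rabs_Ropp. lra.
Qed.

Variables eta al : R.
Hypotheses (Heta : 0 < eta < T) (Hal : 0 < al) (Hae : al * eta < 1).

Definition shoot d k c : R := delayed_iter d c k T - al * RInt (delayed_iter d c k) 0 eta.

Lemma shoot_continuous d k c0 : 0 < d -> continuity_pt (shoot d k) c0.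
Proof.
intros Hd e He.
set (e' := e / (2 * (1 + al * eta))).
assert (He' : 0 < e') by (apply Rdiv_lt_0_compat; nra).
destruct (delayed_iter_continuous_c d k Hd c0 e' He') as [dl [Hdl H]].
exists dl. split; auto. intros c [_ Hc]. simpl in *. unfold R_dist in *. unfold shoot.
assert (H1 : Rabs (delayed_iter d c k T - delayed_iter d c0 k T) < e') by (apply H; auto; lra).
assert (H2 : Rabs (RInt (delayed_iter d c k) 0 eta - RInt (delayed_iter d c0 k) 0 eta) <= eta * e').
{ rewrite <- RInt_minus_Rcont by apply Rcontinuous_delayed_iter.
  replace (eta * e') with ((eta - 0) * e') by ring.
  apply RInt_abs_le_Rcont; [lra | apply Rcontinuous_minus; apply Rcontinuous_delayed_iter |].
  intros x Hx. left. apply H; auto; lra. }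
replace (delayed_iter d c k T - al * RInt (delayed_iter d c k) 0 eta
         - (delayed_iter d c0 k T - al * RInt (delayed_iter d c0 k) 0 eta))
  with ((delayed_iter d c k T - delayed_iter d c0 k T)
        - al * (RInt (delayed_iter d c k) 0 eta - RInt (delayed_iter d c0 k) 0 eta)) by ring.
eapply Rle_lt_trans; [apply Rabs_triang|]. rewrite Rabs_Ropp, Rabs_mult, (Rabs_right al) by lra.
assert (e' * (2 * (1 + al * eta)) = e) by (unfold e'; field; nra).
nra.
Qed.

Lemma shoot_root d k lo hi : 0 < d -> lo < hi -> 0 < shoot d k lo -> shoot d k hi < 0 ->
  exists c, lo <= c <= hi /\ shoot d k c = 0.
Proof.
intros Hd Hlh Hlo Hhi.
assert (Hcont : forall c, lo <= c <= hi -> continuity_pt (fun c => - shoot d k c) c)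
  by (intros c _; apply (continuity_pt_opp (shoot d k)), shoot_continuous, Hd).
destruct (Ranalysis5.IVT_interv _ lo hi Hcont Hlh ltac:(lra) ltac:(lra)) as [c [Hc Hc0]].
exists c. split; [exact Hc | lra].
Qed.

Definition green_int (g : R -> R) : R :=
  RInt (fun s => (T - s) * g s) 0 T - al * RInt (fun s => (eta - s) ^ 2 / 2 * g s) 0 eta.

Lemma shoot_S_RInt2 d k c : shoot d (S k) c =
  c - RInt2 (delayed_rhs d c k) T - al * (eta * c - RInt (RInt2 (delayed_rhs d c k)) 0 eta).
Proof.
unfold shoot. rewrite delayed_iter_S.
rewrite (RInt_ext_R _ (fun t => c - RInt2 (delayed_rhs d c k) t)) by (intros; apply delayed_iter_S).
rewrite RInt_minus_Rcont, RInt_const_R; [ring | apply Rcontinuous_const |].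
apply Rcontinuous_RInt2, Rcontinuous_delayed_rhs.
Qed.

Lemma shoot_S d k c : shoot d (S k) c = c * (1 - al * eta) - green_int (delayed_rhs d c k).
Proof.
rewrite shoot_S_RInt2. unfold green_int.
rewrite RInt2_kernel, RInt_RInt2_kernel by apply Rcontinuous_delayed_rhs. ring.
Qed.

Lemma green_int_nonneg h : Rcontinuous h -> (forall s, 0 <= s <= T -> 0 <= h s) -> 0 <= green_int h.
Proof.
intros Hh Hp. unfold green_int.
rewrite <- (RInt_Chasles_Rcont _ 0 eta T) by Rcont.
assert (0 <= RInt (fun s => (T - s) * h s) eta T).
{ apply RInt_ge0_Rcont; [lra | Rcont |]. intros s Hs. apply Rmult_le_pos; [lra | apply Hp; lra]. }
rewrite <- RInt_scal_Rcont by Rcont.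
assert (RInt (fun s => al * ((eta - s) ^ 2 / 2 * h s)) 0 eta <= RInt (fun s => (T - s) * h s) 0 eta).
{ apply RInt_le_Rcont; [lra | Rcont | Rcont |].
  intros s Hs. assert (0 <= h s) by (apply Hp; lra).
  assert (al * ((eta - s) ^ 2 / 2) <= T - s) by (assert (al * (eta - s) <= 1) by nra; nra).
  replace (al * ((eta - s) ^ 2 / 2 * h s)) with (al * ((eta - s) ^ 2 / 2) * h s) by ring.
  apply Rmult_le_compat_r; auto. }
lra.
Qed.

Lemma green_int_minus g h : Rcontinuous g -> Rcontinuous h ->
  green_int (fun s => g s - h s) = green_int g - green_int h.
Proof.
intros. unfold green_int.
rewrite (RInt_ext_R (fun s => (T - s) * (g s - h s)) (fun s => (T - s) * g s - (T - s) * h s))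
  by (intros; ring).
rewrite (RInt_ext_R (fun s => (eta - s) ^ 2 / 2 * (g s - h s))
           (fun s => (eta - s) ^ 2 / 2 * g s - (eta - s) ^ 2 / 2 * h s)) by (intros; ring).
rewrite !RInt_minus_Rcont by Rcont. ring.
Qed.

Lemma green_int_scal g q : Rcontinuous g -> green_int (fun s => q * g s) = q * green_int g.
Proof.
intros. unfold green_int.
rewrite (RInt_ext_R (fun s => (T - s) * (q * g s)) (fun s => q * ((T - s) * g s))) by (intros; ring).
rewrite (RInt_ext_R (fun s => (eta - s) ^ 2 / 2 * (q * g s)) (fun s => q * ((eta - s) ^ 2 / 2 * g s)))
  by (intros; ring).
rewrite !RInt_scal_Rcont by Rcont. ring.
Qed.

Lemma green_int_le g h : Rcontinuous g -> Rcontinuous h ->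
  (forall s, 0 <= s <= T -> h s <= g s) -> green_int h <= green_int g.
Proof.
intros Hg Hh Hhg.
assert (0 <= green_int (fun s => g s - h s))
  by (apply green_int_nonneg; [Rcont | intros s Hs; specialize (Hhg s Hs); lra]).
rewrite green_int_minus in H by auto. lra.
Qed.

Lemma green_int_le_RInt g : Rcontinuous g -> (forall s, 0 <= g s) ->
  green_int g <= RInt (fun s => (T - s) * g s) 0 T.
Proof.
intros Hg Hp. unfold green_int.
assert (0 <= RInt (fun s => (eta - s) ^ 2 / 2 * g s) 0 eta).
{ apply RInt_ge0_Rcont; [lra | Rcont |]. intros. apply Rmult_le_pos; auto.
  pose proof (pow2_ge_0 (eta - x)). lra. }
nra.
Qed.

Lemma shoot_pos_small d k r lam : 0 < r -> (forall y, y <= r -> Fe y <= lam * r) ->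
  lam * RInt (fun s => (T - s) * ab s) 0 T < 1 - al * eta -> 0 < shoot d (S k) r.
Proof.
intros Hr Hsmall Hlam. rewrite shoot_S.
set (g := delayed_rhs d r k).
assert (Hg : Rcontinuous g) by apply Rcontinuous_delayed_rhs.
assert (RInt (fun s => (T - s) * g s) 0 T <= RInt (fun s => lam * r * ((T - s) * ab s)) 0 T).
{ apply RInt_le_Rcont; [lra | Rcont | Rcont |]. intros s Hs.
  replace (lam * r * ((T - s) * ab s)) with ((T - s) * (ab s * (lam * r))) by ring.
  apply Rmult_le_compat_l; [lra|]. apply Rmult_le_compat_l; auto.
  apply Hsmall, delayed_iter_le, Rmax_r. }
rewrite RInt_scal_Rcont in H by Rcont.
pose proof (green_int_le_RInt g Hg (delayed_rhs_nonneg d r k)).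
nra.
Qed.

Lemma shoot_neg_large d n R0 mu : 0 < d -> T <= INR (S n) * d -> 0 < R0 -> 0 <= mu ->
  (forall y, kappa T eta al * R0 <= y -> mu * y <= Fe y) ->
  1 - al * eta < mu * kappa T eta al * green_int ab -> shoot d (S n) R0 < 0.
Proof.
intros Hd Hn HR Hmu Hlarge Hmu2. apply Rnot_le_lt. intros Hnn.
set (g := delayed_rhs d R0 n).
assert (Hg : Rcontinuous g) by apply Rcontinuous_delayed_rhs.
assert (Hk : forall t, 0 <= t <= T -> kappa T eta al * R0 <= delayed_iter d R0 (S n) t).
{ intros t Ht. rewrite delayed_iter_S. rewrite shoot_S_RInt2 in Hnn.
  apply concave_lower_bound; auto; [intros s _; apply delayed_rhs_nonneg | lra]. }
assert (Hgl : forall s, 0 <= s <= T -> mu * kappa T eta al * R0 * ab s <= g s).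
{ intros s Hs. pose proof (delayed_in d T s Hd Hs) as Hm. unfold g, delayed_rhs.
  rewrite <- delayed_iter_stable; [| exact Hd |].
  2: { split; [apply Hm|]. rewrite S_INR in Hn. unfold delayed. apply Rmax_lub; [lra|].
       pose proof (pos_INR n). nra. }
  rewrite Rmult_comm. apply Rmult_le_compat_l; [auto|].
  eapply Rle_trans; [| apply Hlarge, Hk, Hm]. rewrite Rmult_assoc.
  apply Rmult_le_compat_l; [exact Hmu | apply Hk, Hm]. }
assert (Hgreen : green_int (fun s => mu * kappa T eta al * R0 * ab s) <= green_int g)
  by (apply green_int_le; [exact Hg | Rcont | exact Hgl]).
rewrite green_int_scal in Hgreen by exact Hab.
rewrite shoot_S in Hnn. fold g in Hnn.
nra.
Qed.

Section DelayedLimit.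

Variable U : (nat -> Prop) -> Prop.
Hypothesis HU : ultrafilter_nat U.
Variables (u : nat -> R -> R) (dn : nat -> R) (L lo hi : R).
Hypotheses (HL : 0 <= L)
  (Hbnd : forall n t, 0 <= t <= T -> lo <= u n t <= hi)
  (Hlip : forall n t t', 0 <= t <= T -> 0 <= t' <= T -> Rabs (u n t - u n t') <= L * Rabs (t - t'))
  (Hdn : forall n, 0 < dn n) (Hdn0 : forall e, 0 < e -> exists N, forall n, (N <= n)%nat -> dn n < e).

Lemma delayed_forcing_unif uL : (forall t, lo <= uL t <= hi) -> ultra_unif U u uL T ->
  ultra_unif U (fun n s => ab s * Fe (u n (delayed (dn n) s))) (fun s => ab s * Fe (uL s)) T.
Proof.
intros HuL Hunif e He. pose proof A_nonneg as HA.
assert (HeA : 0 < e / (A + 1)) by (apply Rdiv_lt_0_compat; lra).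
destruct (Rcontinuous_unif Fe lo hi HF _ HeA) as [d1 [Hd1 Hu]].
destruct (Hdn0 (d1 / (2 * (L + 1)))) as [N HN]; [apply Rdiv_lt_0_compat; lra|].
apply (ultra_impl _ HU (fun n => (forall t, 0 <= t <= T -> Rabs (u n t - uL t) < d1 / 2) /\ (N <= n)%nat));
  [| apply (ultra_and _ HU); [apply Hunif; lra | apply (ultra_tail _ HU)]].
intros n [Hn HNn] s Hs. cbv beta.
set (m := delayed (dn n) s).
assert (Hm : 0 <= m <= T) by now apply delayed_in.
assert (B1 : Rabs (u n m - u n s) <= L * Rabs (m - s)) by now apply Hlip.
assert (B2 : L * Rabs (m - s) < d1 / 2).
{ apply Rle_lt_trans with (L * (d1 / (2 * (L + 1)))).
  - apply Rmult_le_compat_l; [exact HL|]. apply Rle_trans with (dn n); [apply delayed_close; auto; lra|].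
    left. now apply HN.
  - apply Rmult_lt_reg_r with (2 * (L + 1)); [lra|]. field_simplify; nra. }
assert (B3 : Rabs (Fe (u n m) - Fe (uL s)) < e / (A + 1)).
{ apply Hu; [now apply Hbnd | apply HuL |].
  specialize (Hn s Hs). apply Rabs_le_between in B1. apply Rabs_def2 in Hn. apply Rabs_def1; lra. }
rewrite <- Rmult_minus_distr_l, Rabs_mult, Rabs_right by (apply Rle_ge, Hab0).
assert (ab s <= A) by now apply HabA. pose proof (Hab0 s). pose proof (Rabs_pos (Fe (u n m) - Fe (uL s))).
assert (A * (e / (A + 1)) < e) by (apply Rmult_lt_reg_r with (A + 1); [lra | field_simplify; nra]).
nra.
Qed.

Lemma delayed_limit (c : nat -> R) clo chi :
  (forall n, clo <= c n <= chi) -> (forall n, Rcontinuous (u n)) ->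
  (forall n t, 0 <= t <= T -> u n t = c n - RInt2 (fun s => ab s * Fe (u n (delayed (dn n) s))) t) ->
  (forall n, u n T = al * RInt (u n) 0 eta) ->
  exists cL w, clo <= cL <= chi /\ Rcontinuous w /\
    (forall t, w t = cL - RInt2 (fun s => ab s * Fe (w (clamp T s))) t) /\
    w T = al * RInt w 0 eta.
Proof.
intros Hc HuC Heq HBC. assert (HT0 : 0 < T) by lra.
destruct (ultra_cvg_exists U HU c clo chi Hc) as [cL [HcL HcU]].
destruct (ultra_limit_function U HU u T L lo hi HT0 HL Hbnd Hlip) as [uL [HuLb [Hpt HuLlip]]].
pose proof (ultra_cvg_uniform U HU u T L HT0 HL Hlip uL Hpt HuLlip) as Hunif.
pose proof (delayed_forcing_unif uL HuLb Hunif) as Hforce.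
assert (HuLc : Rcontinuous uL) by exact (Rcontinuous_lipschitz uL L HuLlip).
set (G := fun s => ab s * Fe (uL (clamp T s))).
assert (HG : Rcontinuous G) by (pose proof (Rcontinuous_clamp T HT); unfold G; Rcont).
set (w := fun t => cL - RInt2 G t).
assert (HwC : Rcontinuous w) by (pose proof (Rcontinuous_RInt2 G HG); unfold w; Rcont).
assert (Hw : forall t, 0 <= t <= T -> uL t = w t).
{ intros t Ht. apply (ultra_cvg_unique U HU (fun n => u n t)); [now apply Hpt|].
  apply (ultra_cvg_ext U HU (fun n => c n - RInt2 (fun s => ab s * Fe (u n (delayed (dn n) s))) t));
    [intros n; symmetry; now apply Heq|].
  apply ultra_cvg_minus; auto. apply (ultra_unif_RInt2 U HU _ _ T t HT); auto.
  - intros n. pose proof (HuC n). pose proof (Rcontinuous_delayed (dn n)). Rcont.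
  - intros e He. eapply (ultra_impl _ HU); [| exact (Hforce e He)].
    intros n Hn s Hs. unfold G. rewrite clamp_id by exact Hs. now apply Hn. }
assert (Hunif_w : ultra_unif U u w T).
{ intros e He. eapply (ultra_impl _ HU); [| exact (Hunif e He)].
  intros n Hn t Ht. rewrite <- Hw by exact Ht. now apply Hn. }
exists cL, w. split; [exact HcL|]. split; [exact HwC|]. split.
- intros t. unfold w at 1. f_equal. apply RInt2_ext. intros s. unfold G.
  rewrite Hw; [reflexivity | apply clamp_in; lra].
- apply (ultra_cvg_unique U HU (fun n => u n T)).
  + now apply (ultra_unif_at U HU _ _ T).
  + apply (ultra_cvg_ext U HU (fun n => al * RInt (u n) 0 eta)); [intros n; symmetry; apply HBC|].
    apply ultra_cvg_scal, (ultra_unif_RInt U HU _ _ T); auto; lra.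
Qed.

End DelayedLimit.

Lemma delayed_iter_equation d c n t : 0 < d -> T <= INR (S n) * d -> 0 <= t <= T ->
  delayed_iter d c (S n) t = c - RInt2 (fun s => ab s * Fe (delayed_iter d c (S n) (delayed d s))) t.
Proof.
intros Hd Hn Ht. rewrite delayed_iter_S. f_equal. apply (RInt2_ext_Icc _ _ T); [exact Ht|].
intros s Hs. unfold delayed_rhs. rewrite delayed_iter_stable; [reflexivity | exact Hd |].
split; [now apply (delayed_in d T) |]. rewrite S_INR in Hn. unfold delayed.
pose proof (pos_INR n). apply Rmax_lub; nra.
Qed.

Lemma shooting_fixed_point r R0 lam mu :
  0 < r < R0 -> (forall y, y <= r -> Fe y <= lam * r) ->
  lam * RInt (fun s => (T - s) * ab s) 0 T < 1 - al * eta ->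
  0 <= mu -> (forall y, kappa T eta al * R0 <= y -> mu * y <= Fe y) ->
  1 - al * eta < mu * kappa T eta al * green_int ab ->
  exists c w, r <= c /\ Rcontinuous w /\
    (forall t, w t = c - RInt2 (fun s => ab s * Fe (w (clamp T s))) t) /\ w T = al * RInt w 0 eta.
Proof.
intros Hr Hsmall Hlam Hmu Hlarge Hmu2. assert (HT0 : 0 < T) by lra.
set (dl := fun n => T / INR (S n)).
assert (Hdl : forall n, 0 < dl n) by (intros; apply step_size_pos, HT0).
assert (Hcover : forall n, T <= INR (S n) * dl n) by (intros; apply step_size_cover, HT0).
assert (Hroot : forall n, exists c, r <= c <= R0 /\ shoot (dl n) (S n) c = 0).
{ intros n. apply shoot_root; [apply Hdl | lra | | ].
  - apply (shoot_pos_small _ _ r lam); auto; lra.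
  - apply (shoot_neg_large _ _ R0 mu); auto; lra. }
destruct (functional_choice _ Hroot) as [cs Hcs].
destruct ultrafilter_nat_exists as [U HU].
destruct (HFbnd R0) as [M [HM HFM]].
set (u := fun n => delayed_iter (dl n) (cs n) (S n)).
pose proof A_nonneg as HA.
destruct (delayed_limit U HU u dl (T * (A * M)) (r - T * (T * (A * M))) R0) with (c := cs) (clo := r) (chi := R0)
  as [c [w [Hc Hw]]].
- repeat apply Rmult_le_pos; lra.
- intros n t Ht. destruct (Hcs n) as [Hcn _]. unfold u. split.
  + pose proof (delayed_iter_ge (dl n) (cs n) (S n) M R0 t (Hdl n) HM HFM ltac:(lra) Ht). lra.
  + pose proof (delayed_iter_le (dl n) (cs n) (S n) t ltac:(lra)). lra.
- intros n t t' Ht Ht'. apply (delayed_iter_lipschitz _ _ _ M R0); auto. apply Hcs.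
- exact Hdl.
- apply step_size_vanish, HT0.
- apply Hcs.
- intros n. apply Rcontinuous_delayed_iter.
- intros n t Ht. now apply delayed_iter_equation.
- intros n. destruct (Hcs n) as [_ H0]. unfold shoot in H0. unfold u. lra.
- exists c, w. split; [lra | exact Hw].
Qed.

End DelayedIteration.

(** * Back to the boundary value problem *)

Section IntegralEquation.

Variables (G w : R -> R) (c : R).
Hypotheses (HG : Rcontinuous G) (Hw : forall t, w t = c - RInt2 G t).

Lemma integral_eq_is_derive t : is_derive w t (- RInt G 0 t).
Proof.
apply (is_derive_ext (fun t => c - RInt2 G t)); [intros; symmetry; apply Hw|].
apply (is_derive_eq _ _ _ _ (is_derive_minus _ _ t _ _ (is_derive_const c t)
         (is_derive_RInt0 _ t (Rcontinuous_RInt0 G HG)))).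
change (@eq R (0 - RInt G 0 t) (- RInt G 0 t)). ring.
Qed.

Lemma integral_eq_is_derive2 t : is_derive (Derive w) t (- G t).
Proof.
apply (is_derive_ext (fun t => - RInt G 0 t)).
- intros s. symmetry. apply is_derive_unique, integral_eq_is_derive.
- apply (is_derive_opp (fun t => RInt G 0 t)), is_derive_RInt0, HG.
Qed.

Lemma integral_eq_Derive2 t : Derive_n w 2 t = - G t.
Proof. apply is_derive_unique, integral_eq_is_derive2. Qed.

Lemma integral_eq_C2 a b : C2_on a b w.
Proof.
split.
- intros t _. split; eexists; [apply integral_eq_is_derive | apply integral_eq_is_derive2].
- intros x _. apply (filterlim_ext (fun y => - G y)); [intros; symmetry; apply integral_eq_Derive2|].
  rewrite integral_eq_Derive2.
  eapply filterlim_filter_le_1; [| exact (Rcontinuous_opp G HG x)].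
  intros Q HQ. apply filter_imp with (2 := HQ). auto.
Qed.

Lemma integral_eq_antitone : (forall s, 0 <= s -> 0 <= G s) ->
  forall t t', 0 <= t <= t' -> w t' <= w t.
Proof. intros HG0 t t' Ht. rewrite !Hw. pose proof (RInt2_le G t t' HG HG0 Ht). lra. Qed.

(* w decreases, so w(T) = alpha * int_0^eta w >= alpha * eta * w(T). *)
Lemma integral_eq_end_nonneg T eta alpha : (forall s, 0 <= s -> 0 <= G s) ->
  0 < eta <= T -> 0 <= alpha -> alpha * eta < 1 -> w T = alpha * RInt w 0 eta -> 0 <= w T.
Proof.
intros HG0 Heta Hal Hae HBC.
assert (Hwc : Rcontinuous w).
{ apply (Rcontinuous_ext (fun t => c - RInt2 G t)); [intros; symmetry; apply Hw|].
  pose proof (Rcontinuous_RInt2 G HG). Rcont. }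
assert (RInt (fun _ => w T) 0 eta <= RInt w 0 eta).
{ apply RInt_le_Rcont; [lra | Rcont | exact Hwc |]. intros x Hx. apply integral_eq_antitone; auto; lra. }
rewrite RInt_const_R in H.
assert (alpha * ((eta - 0) * w T) <= alpha * RInt w 0 eta) by (apply Rmult_le_compat_l; lra).
nra.
Qed.

End IntegralEquation.

Lemma at_right_0_ball g l e : filterlim g (at_right 0) (locally l) -> 0 < e ->
  exists d, 0 < d /\ forall x, 0 < x < d -> Rabs (g x - l) < e.
Proof.
intros H He. destruct (H _ (locally_ball l (mkposreal e He))) as [d Hd].
exists d. split; [apply cond_pos|]. intros x Hx. apply Hd; [|lra].
change (Rabs (x - 0) < d). rewrite Rminus_0_r, Rabs_right; lra.
Qed.

Lemma p_infty_ball g l e : filterlim g (Rbar_locally p_infty) (locally l) -> 0 < e ->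
  exists M, forall x, M < x -> Rabs (g x - l) < e.
Proof.
intros H He. destruct (H _ (locally_ball l (mkposreal e He))) as [M HM]. exists M. exact HM.
Qed.

Lemma cont_on_nonneg_0_ball f e : cont_on (fun x => 0 <= x) f -> 0 < e ->
  exists d, 0 < d /\ forall x, 0 <= x < d -> Rabs (f x - f 0) < e.
Proof.
intros Hc He. destruct (Hc 0 (Rle_refl 0) _ (locally_ball (f 0) (mkposreal e He))) as [d Hd].
exists d. split; [apply cond_pos|]. intros x Hx. apply Hd; [|lra].
change (Rabs (x - 0) < d). rewrite Rminus_0_r, Rabs_right; lra.
Qed.

(* f(0) = lim f(x) = lim x * (f(x)/x) = 0 as x -> 0+. *)
Lemma zero_of_ratio_limit_at_0 f l : cont_on (fun x => 0 <= x) f -> (forall x, 0 <= x -> 0 <= f x) ->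
  filterlim (fun x => f x / x) (at_right 0) (locally l) -> f 0 = 0.
Proof.
intros Hc Hp Hl. apply Rle_antisym; [|apply Hp; lra]. apply Rnot_lt_le. intros Hf0.
destruct (at_right_0_ball _ l 1 Hl Rlt_0_1) as [d1 [Hd1 H1]].
destruct (cont_on_nonneg_0_ball f (f 0 / 2) Hc ltac:(lra)) as [d2 [Hd2 H2]].
set (x := Rmin (Rmin d1 d2) (f 0 / (2 * (Rabs l + 1))) / 2).
pose proof (Rabs_pos l).
assert (Hm : 0 < Rmin (Rmin d1 d2) (f 0 / (2 * (Rabs l + 1))))
  by (repeat apply Rmin_pos; auto; apply Rdiv_lt_0_compat; lra).
assert (Hx1 : x < d1) by (pose proof (Rmin_l (Rmin d1 d2) (f 0 / (2 * (Rabs l + 1)))); pose proof (Rmin_l d1 d2); unfold x; lra).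
assert (Hx2 : x < d2) by (pose proof (Rmin_l (Rmin d1 d2) (f 0 / (2 * (Rabs l + 1)))); pose proof (Rmin_r d1 d2); unfold x; lra).
assert (Hx3 : x * (Rabs l + 1) <= f 0 / 2).
{ pose proof (Rmin_r (Rmin d1 d2) (f 0 / (2 * (Rabs l + 1)))).
  apply Rle_trans with (f 0 / (2 * (Rabs l + 1)) * (Rabs l + 1)); [apply Rmult_le_compat_r; unfold x; lra|].
  right. field. lra. }
assert (Hx : 0 < x) by (unfold x; lra).
specialize (H1 x ltac:(lra)). specialize (H2 x ltac:(lra)).
apply Rabs_def2 in H1. apply Rabs_def2 in H2. pose proof (Rle_abs l).
assert (f x = x * (f x / x)) by (field; lra).
assert (x * (f x / x) <= x * (Rabs l + 1)) by (apply Rmult_le_compat_l; lra).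
lra.
Qed.

Lemma small_radius f l lam : cont_on (fun x => 0 <= x) f -> (forall x, 0 <= x -> 0 <= f x) ->
  filterlim (fun x => f x / x) (at_right 0) (locally l) -> 0 <= l < lam ->
  exists r, 0 < r /\ forall y, y <= r -> f (Rmax y 0) <= lam * r.
Proof.
intros Hc Hp Hl Hlam.
pose proof (zero_of_ratio_limit_at_0 f l Hc Hp Hl) as Hf0.
destruct (at_right_0_ball _ l (lam - l) Hl ltac:(lra)) as [d [Hd Hsmall]].
exists (d / 2). split; [lra|]. intros y Hy. unfold Rmax. destruct (Rle_dec y 0).
- rewrite Hf0. apply Rmult_le_pos; lra.
- specialize (Hsmall y ltac:(lra)). apply Rabs_def2 in Hsmall.
  replace (f y) with (y * (f y / y)) by (field; lra).
  apply Rle_trans with (y * lam); [apply Rmult_le_compat_l|]; nra.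
Qed.

Lemma large_radius f l mu K B : filterlim (fun x => f x / x) (Rbar_locally p_infty) (locally l) ->
  mu < l -> 0 < K -> exists R0, B < R0 /\ forall y, K * R0 <= y -> mu * y <= f (Rmax y 0).
Proof.
intros Hl Hmu HK.
destruct (p_infty_ball _ l (l - mu) Hl ltac:(lra)) as [M HM].
exists (Rmax B (Rmax M 0 / K) + 1). split; [pose proof (Rmax_l B (Rmax M 0 / K)); lra|].
intros y Hy.
assert (HMy : Rmax M 0 < y).
{ pose proof (Rmax_r B (Rmax M 0 / K)).
  assert (K * (Rmax M 0 / K) = Rmax M 0) by (field; lra). nra. }
pose proof (Rmax_l M 0). pose proof (Rmax_r M 0).
rewrite Rmax_left by lra. specialize (HM y ltac:(lra)). apply Rabs_def2 in HM.
replace (f y) with (y * (f y / y)) by (field; lra). rewrite Rmult_comm.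
apply Rmult_le_compat_l; lra.
Qed.

Definition lambda2_int (T eta alpha : R) (a : R -> R) : R :=
  RInt (fun s => (T - s) * a s) eta T
  + / 2 * RInt (fun s => (2 * (T - eta) + alpha * (eta ^ 2 - s ^ 2)) * a s) 0 eta.

Lemma Lambda2_lambda2_int T eta alpha a :
  Lambda2 T eta alpha a = (1 - alpha * eta) / (gammaP T eta alpha * lambda2_int T eta alpha a).
Proof. reflexivity. Qed.

Lemma lambda2_int_ext T eta alpha a b : 0 < eta < T -> (forall s, 0 <= s <= T -> a s = b s) ->
  lambda2_int T eta alpha a = lambda2_int T eta alpha b.
Proof.
intros Heta H. unfold lambda2_int. f_equal; [|f_equal];
  apply RInt_ext_Icc; try lra; intros s Hs; rewrite H by lra; reflexivity.
Qed.

Lemma lambda2_int_le_green_int T eta alpha ab : Rcontinuous ab -> (forall s, 0 <= ab s) ->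
  0 < eta < T -> 0 <= alpha -> alpha * eta <= 1 -> lambda2_int T eta alpha ab <= green_int T eta alpha ab.
Proof.
intros Hab Hab0 Heta Hal Hae. unfold lambda2_int, green_int.
rewrite <- (RInt_Chasles_Rcont _ 0 eta T) by Rcont.
rewrite <- (RInt_scal_Rcont _ (/ 2)) by Rcont.
assert (E : RInt (fun s => (T - s) * ab s - alpha * ((eta - s) ^ 2 / 2 * ab s)) 0 eta
            = RInt (fun s => (T - s) * ab s) 0 eta - alpha * RInt (fun s => (eta - s) ^ 2 / 2 * ab s) 0 eta)
  by (rewrite RInt_minus_Rcont, RInt_scal_Rcont by Rcont; reflexivity).
assert (RInt (fun s => / 2 * ((2 * (T - eta) + alpha * (eta ^ 2 - s ^ 2)) * ab s)) 0 eta <=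
        RInt (fun s => (T - s) * ab s - alpha * ((eta - s) ^ 2 / 2 * ab s)) 0 eta).
{ apply RInt_le_Rcont; [lra | Rcont | Rcont |]. intros s Hs.
  assert (0 <= (eta - s) * (1 - alpha * eta) * ab s) by (apply Rmult_le_pos; auto; apply Rmult_le_pos; lra).
  replace ((T - s) * ab s - alpha * ((eta - s) ^ 2 / 2 * ab s))
    with (/ 2 * ((2 * (T - eta) + alpha * (eta ^ 2 - s ^ 2)) * ab s) + (eta - s) * (1 - alpha * eta) * ab s)
    by field.
  lra. }
lra.
Qed.

Lemma lambda2_int_ge T eta alpha ab : Rcontinuous ab -> (forall s, 0 <= ab s) ->
  0 < eta < T -> 0 <= alpha -> (T - eta) / T * RInt (fun s => (T - s) * ab s) 0 T <= lambda2_int T eta alpha ab.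
Proof.
intros Hab Hab0 Heta Hal. unfold lambda2_int.
rewrite <- (RInt_Chasles_Rcont _ 0 eta T), Rmult_plus_distr_l by Rcont.
rewrite <- (RInt_scal_Rcont _ ((T - eta) / T)), <- (RInt_scal_Rcont _ (/ 2)) by Rcont.
assert (RInt (fun s => (T - eta) / T * ((T - s) * ab s)) 0 eta <=
        RInt (fun s => / 2 * ((2 * (T - eta) + alpha * (eta ^ 2 - s ^ 2)) * ab s)) 0 eta).
{ apply RInt_le_Rcont; [lra | Rcont | Rcont |]. intros s Hs.
  replace ((T - eta) / T * ((T - s) * ab s)) with (((T - eta) - (T - eta) * s / T) * ab s) by (field; lra).
  replace (/ 2 * ((2 * (T - eta) + alpha * (eta ^ 2 - s ^ 2)) * ab s))
    with (((T - eta) + alpha * (eta ^ 2 - s ^ 2) / 2) * ab s) by field.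
  apply Rmult_le_compat_r; [auto|].
  assert (0 <= (T - eta) * s / T) by (apply Rdiv_le_0_compat; nra).
  assert (0 <= alpha * (eta ^ 2 - s ^ 2)) by (apply Rmult_le_pos; nra). lra. }
assert (0 <= RInt (fun s => (T - s) * ab s) eta T)
  by (apply RInt_ge0_Rcont; [lra | Rcont | intros; apply Rmult_le_pos; auto; lra]).
assert ((T - eta) / T <= 1) by (apply Rmult_le_reg_r with T; [lra | unfold Rdiv; field_simplify; lra]).
assert (0 <= (T - eta) / T) by (apply Rdiv_le_0_compat; lra).
nra.
Qed.

Lemma gammaP_bounds T eta alpha : 0 < eta < T -> 0 < alpha -> alpha * eta < 1 ->
  0 < gammaP T eta alpha < 1 /\ gammaP T eta alpha <= kappa T eta alpha.
Proof.
intros Heta Hal Hae. unfold gammaP, kappa.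
assert (0 < T - alpha * eta ^ 2) by nra. assert (0 < 2 * T - alpha * eta ^ 2) by nra.
split; [split|].
- apply Rdiv_lt_0_compat; [repeat apply Rmult_lt_0_compat|]; lra.
- apply Rmult_lt_reg_r with (T - alpha * eta ^ 2); [lra|]. unfold Rdiv.
  rewrite Rmult_assoc, Rinv_l by lra. nra.
- assert (E : alpha * eta * (2 * T - eta) / (2 * T - alpha * eta ^ 2) - alpha * eta * (T - eta) / (T - alpha * eta ^ 2)
            = alpha * eta * (T * eta * (1 - alpha * eta)) / ((2 * T - alpha * eta ^ 2) * (T - alpha * eta ^ 2)))
    by (field; lra).
  assert (0 <= alpha * eta * (T * eta * (1 - alpha * eta)) / ((2 * T - alpha * eta ^ 2) * (T - alpha * eta ^ 2)))
    by (apply Rdiv_le_0_compat; [repeat apply Rmult_le_pos | apply Rmult_lt_0_compat]; lra).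
  lra.
Qed.

(* Rocq's [x / 0 = 0] makes this hold for every y. *)
Lemma Rdiv_pos_den x y : 0 < x -> 0 < x / y -> 0 < y.
Proof.
intros Hx Hxy. destruct (Rtotal_order y 0) as [Hy|[Hy|Hy]]; auto.
- assert (x / y < 0) by (apply Rdiv_pos_neg; auto). lra.
- subst. unfold Rdiv in Hxy. rewrite Rinv_0, Rmult_0_r in Hxy. lra.
Qed.

Lemma Lambda1_margin T eta alpha a ab alpha1 theta1 :
  alpha * eta < 1 -> (forall s, 0 <= s <= T -> ab s = a s) -> 0 <= T ->
  0 < theta1 <= 1 -> 0 <= alpha1 < theta1 * Lambda1 T eta alpha a ->
  0 < RInt (fun s => (T - s) * ab s) 0 T /\
  exists lam, alpha1 < lam /\ lam * RInt (fun s => (T - s) * ab s) 0 T < 1 - alpha * eta.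
Proof.
intros Hae Habe HT Hth1 Hal1.
set (P := RInt (fun s => (T - s) * ab s) 0 T).
assert (HL1 : Lambda1 T eta alpha a = (1 - alpha * eta) / P).
{ unfold Lambda1, P. f_equal. apply RInt_ext_Icc; [lra|]. intros s Hs. now rewrite Habe. }
rewrite HL1 in Hal1. set (L1 := (1 - alpha * eta) / P) in Hal1.
assert (HP : 0 < P) by (apply (Rdiv_pos_den (1 - alpha * eta)); [lra | fold L1; nra]).
assert (HL1P : L1 * P = 1 - alpha * eta) by (unfold L1; field; lra).
assert (alpha1 < L1) by (assert (0 < L1) by nra; nra).
split; [exact HP|]. exists ((alpha1 + L1) / 2). split; [lra|].
rewrite <- HL1P. apply Rmult_lt_compat_r; lra.
Qed.

Lemma Lambda2_margin T eta alpha a ab beta1 theta2 :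
  0 < eta < T -> 0 < alpha -> alpha * eta < 1 ->
  Rcontinuous ab -> (forall s, 0 <= ab s) -> (forall s, 0 <= s <= T -> ab s = a s) ->
  0 < RInt (fun s => (T - s) * ab s) 0 T ->
  1 <= theta2 -> theta2 / gammaP T eta alpha * Lambda2 T eta alpha a < beta1 ->
  exists mu, 0 <= mu < beta1 /\ 1 - alpha * eta < mu * kappa T eta alpha * green_int T eta alpha ab.
Proof.
intros Heta Hal Hae Hab Hab0 Habe HP Hth2 Hb1.
set (D := lambda2_int T eta alpha ab).
assert (HD : 0 < D).
{ pose proof (lambda2_int_ge T eta alpha ab Hab Hab0 Heta ltac:(lra)). fold D in H.
  assert (0 < (T - eta) / T * RInt (fun s => (T - s) * ab s) 0 T)
    by (apply Rmult_lt_0_compat; [apply Rdiv_lt_0_compat|]; lra). lra. }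
pose proof (lambda2_int_le_green_int T eta alpha ab Hab Hab0 Heta ltac:(lra) ltac:(lra)) as HDg.
destruct (gammaP_bounds T eta alpha Heta Hal Hae) as [[Hg0 Hg1] Hgk].
set (ga := gammaP T eta alpha) in *. set (ka := kappa T eta alpha) in *.
rewrite Lambda2_lambda2_int, (lambda2_int_ext T eta alpha a ab) in Hb1 by (auto; intros; symmetry; auto).
fold ga D in Hb1. set (L2 := (1 - alpha * eta) / (ga * D)) in Hb1.
assert (HL2 : ga * L2 * D = 1 - alpha * eta) by (unfold L2; field; lra).
assert (HL2p : 0 < L2) by (apply Rdiv_lt_0_compat; [lra | apply Rmult_lt_0_compat; lra]).
assert (0 < ga * L2) by (apply Rmult_lt_0_compat; lra).
assert (Hb1' : ga * L2 < beta1 * ka).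
{ assert (1 <= theta2 / ga) by (apply Rmult_le_reg_r with ga; [lra | unfold Rdiv; rewrite Rmult_assoc, Rinv_l; nra]).
  assert (L2 <= theta2 / ga * L2) by (rewrite <- (Rmult_1_l L2) at 1; apply Rmult_le_compat_r; lra).
  assert (ga * L2 <= ka * L2) by (apply Rmult_le_compat_r; lra).
  assert (ka * L2 < ka * beta1) by (apply Rmult_lt_compat_l; lra).
  lra. }
exists ((beta1 + ga * L2 / ka) / 2).
assert (Hmk : ga * L2 < (beta1 + ga * L2 / ka) / 2 * ka).
{ replace ((beta1 + ga * L2 / ka) / 2 * ka) with ((beta1 * ka + ga * L2) / 2) by (field; lra). lra. }
assert (ga * L2 / ka < beta1) by (apply Rmult_lt_reg_r with ka; [lra | unfold Rdiv; rewrite Rmult_assoc, Rinv_l; lra]).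
assert (0 < ga * L2 / ka) by (apply Rdiv_lt_0_compat; lra).
split; [lra|]. rewrite <- HL2.
apply Rlt_le_trans with ((beta1 + ga * L2 / ka) / 2 * ka * D); [apply Rmult_lt_compat_r; lra|].
apply Rmult_le_compat_l; [nra | exact HDg].
Qed.
Lemma positive_solution_of_integral_eq T eta alpha a f ab Fe c w :
  0 < eta < T -> 0 <= alpha -> alpha * eta < 1 -> 0 < c ->
  Rcontinuous ab -> Rcontinuous Fe -> (forall s, 0 <= ab s) -> (forall x, 0 <= Fe x) ->
  (forall s, 0 <= s <= T -> ab s = a s) -> (forall x, 0 <= x -> Fe x = f x) -> Rcontinuous w ->
  (forall t, w t = c - RInt2 (fun s => ab s * Fe (w (clamp T s))) t) -> w T = alpha * RInt w 0 eta ->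
  positive_solution T eta alpha a f w.
Proof.
intros Heta Hal Hae Hc Hab HF Hab0 HF0 Habe HFf Hwc Hw HBC.
set (G := fun s => ab s * Fe (w (clamp T s))).
assert (HG : Rcontinuous G) by (pose proof (Rcontinuous_clamp T ltac:(lra)); unfold G; Rcont).
assert (HG0 : forall s, 0 <= s -> 0 <= G s) by (intros; apply Rmult_le_pos; auto).
assert (Hanti := integral_eq_antitone G w c HG Hw HG0).
assert (HwT := integral_eq_end_nonneg G w c HG Hw T eta alpha HG0 ltac:(lra) Hal Hae HBC).
assert (Hpos : forall t, 0 <= t <= T -> 0 <= w t) by (intros t Ht; pose proof (Hanti t T Ht); lra).
split; [apply (integral_eq_C2 G w c HG Hw) |]. split; [|split; [|split; [exact HBC | split; [exact Hpos|]]]].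
- intros t Ht. rewrite (integral_eq_Derive2 G w c HG Hw). unfold G.
  rewrite clamp_id, Habe, HFf by (try apply Hpos; lra). ring.
- rewrite (is_derive_unique _ _ _ (integral_eq_is_derive G w c HG Hw 0)), RInt_point_R. ring.
- exists 0. split; [lra|]. rewrite Hw, RInt2_0. lra.
Qed.

Lemma Rmax0_comp_bounded g : Rcontinuous (fun x => g (Rmax x 0)) ->
  forall C, exists M, 0 <= M /\ forall x, x <= C -> g (Rmax x 0) <= M.
Proof.
intros Hg C. destruct (Rcontinuous_bounded _ 0 (Rmax C 0) Hg) as [M [HM HgM]].
exists M. split; [exact HM|]. intros x Hx.
replace (Rmax x 0) with (Rmax (Rmax x 0) 0) by (unfold Rmax; repeat destruct Rle_dec; lra).
apply HgM. split; [apply Rmax_r|]. unfold Rmax. repeat destruct Rle_dec; lra.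
Qed.

Theorem corollary5p2 (T eta alpha : R) (f a : R -> R)
  (alpha1 beta1 theta1 theta2 : R) :
  0 < T -> 0 < eta < T -> 0 < alpha < / eta ->
  cont_on (fun x => 0 <= x) f -> (forall x, 0 <= x -> 0 <= f x) ->
  cont_on (Icc 0 T) a -> (forall t, 0 <= t <= T -> 0 <= a t) ->
  (exists t0, 0 <= t0 <= T /\ 0 < a t0) ->
  filterlim (fun x => f x / x) (at_right 0) (locally alpha1) ->
  filterlim (fun x => f x / x) (Rbar_locally p_infty) (locally beta1) ->
  0 < theta1 <= 1 -> 0 <= alpha1 < theta1 * Lambda1 T eta alpha a ->
  1 <= theta2 -> theta2 / gammaP T eta alpha * Lambda2 T eta alpha a < beta1 ->
  exists u : R -> R, positive_solution T eta alpha a f u.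
Proof.
intros HT Heta [Hal Hal_eta] Hfc Hfp Hac Hap _ Hf0 Hfinf Hth1 Hal1 Hth2 Hb1.
assert (Hae : alpha * eta < 1)
  by (rewrite <- (Rinv_l eta) by lra; apply Rmult_lt_compat_r; lra).
set (ab := fun s => a (clamp T s)). set (Fe := fun x => f (Rmax x 0)).
assert (Hab : Rcontinuous ab)
  by exact (cont_on_Rcontinuous _ a _ Hac (Rcontinuous_clamp T ltac:(lra)) (fun x => clamp_in T x ltac:(lra))).
assert (HF : Rcontinuous Fe)
  by exact (cont_on_Rcontinuous _ f _ Hfc (Rcontinuous_Rmax0 _ Rcontinuous_id) (fun x => Rmax_r x 0)).
assert (Habe : forall s, 0 <= s <= T -> ab s = a s) by (intros; unfold ab; now rewrite clamp_id).
assert (Hab0 : forall s, 0 <= ab s) by (intros; apply Hap, clamp_in; lra).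
destruct (Rcontinuous_bounded ab 0 T Hab) as [A [_ HA]].
destruct (Lambda1_margin T eta alpha a ab alpha1 theta1 Hae Habe ltac:(lra) Hth1 Hal1) as [HP [lam [Hlam HlamP]]].
destruct (Lambda2_margin T eta alpha a ab beta1 theta2 Heta Hal Hae Hab Hab0 Habe HP Hth2 Hb1)
  as [mu [Hmu Hmu2]].
destruct (gammaP_bounds T eta alpha Heta Hal Hae) as [[Hg0 _] Hgk].
destruct (small_radius f alpha1 lam Hfc Hfp Hf0 ltac:(lra)) as [r [Hr Hsmall]].
destruct (large_radius f beta1 mu (kappa T eta alpha) r Hfinf ltac:(lra) ltac:(lra)) as [R0 [HR0 Hlarge]].
destruct (shooting_fixed_point ab Fe T A ltac:(lra) Hab HF Hab0 (fun x => Hfp _ (Rmax_r x 0)) HA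
            (Rmax0_comp_bounded f HF) eta alpha Heta Hal Hae r R0 lam mu)
  as [c [w [Hc [Hwc [Hw HBC]]]]]; auto; try lra.
exists w. apply (positive_solution_of_integral_eq T eta alpha a f ab Fe c w); auto; try lra.
- intros x. apply Hfp, Rmax_r.
- intros x Hx. unfold Fe. now rewrite Rmax_left.
Qed.
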